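(* For each $n$ let $p=p_n\in(0,1)$, let $X\sim\mathrm{Bin}(n,p)$ and $R = R_n = 1 + X + \frac{X(X-1)}{2}$. If $p(1-p)^{1/3} \gg n^{-1/9}$, i.e. $n^{1/9}p_n(1-p_n)^{1/3}\to\infty$ as $n\to\infty$, then $$\lim_{n\to\infty}\sup_{w\in\mathbb{R}}\left|\mathbb{P}\left(\frac{R-\mathbb{E}(R)}{\sqrt{\mathbb{V}(R)}}\le w\right) - \Phi(w)\right| = 0,$$ where $\Phi$ is the standard normal distribution function.
   Context: $\mathbb{V}$ denotes variance. $R$ is the number of regions formed when $n$ cuts are attempted on a pizza, each succeeding independently with probability $p$, with every successful cut meeting all prior successful cuts. The notation $a_n\gg b_n$ means $a_n/b_n\to\infty$. *)

From Stdlib Require Import Reals.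
From Coquelicot Require Import Coquelicot.
Open Scope R_scope.

Definition binom_pmf (n : nat) (p : R) (k : nat) : R :=
  Binomial.C n k * p ^ k * (1 - p) ^ (n - k).

(* Number of regions as a function of the number X = k of successful cuts. *)
Definition regions (k : nat) : R := 1 + INR k + INR k * (INR k - 1) / 2.

Definition ER (n : nat) (p : R) : R :=
  sum_f_R0 (fun k => regions k * binom_pmf n p k) n.

Definition VR (n : nat) (p : R) : R :=
  sum_f_R0 (fun k => (regions k - ER n p) ^ 2 * binom_pmf n p k) n.

Definition prob_std_le (n : nat) (p : R) (w : R) : R :=
  sum_f_R0 (fun k =>
    if Rle_dec ((regions k - ER n p) / sqrt (VR n p)) w
    then binom_pmf n p k else 0) n.

Definition std_normal_density (x : R) : R := exp (- x ^ 2 / 2) / sqrt (2 * PI).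

Definition Phi (w : R) : R :=
  RInt_gen std_normal_density (Rbar_locally m_infty) (at_point w).

From Stdlib Require Import Reals Lra Lia Psatz.
From Coquelicot Require Import Coquelicot.
Open Scope R_scope.

(* Since [R = 1 + X + X (X - 1) / 2] is quadratic in [X], its standardization is
   [phi Z / r], where [Z = (X - np) / sd] with [sd = sqrt (np (1 - p))],
   [phi t = t + tau (t^2 - 1)], [tau = O(1 / sqrt (np))] and [r -> 1]; [phi] is increasing
   on the range of [Z], so the distribution function of the standardized [R] at [w] is
   squeezed between [P(Z <= w - d)] and [P(Z <= w + d)] once [np] is large.  The growth
   hypothesis is only used to get [np -> oo] and [np (1 - p) -> oo], and then
   de Moivre-Laplace gives [P(Z <= x) -> Phi x].  That limit comes from a local estimate:
   [ln pmf k + x_k^2 / 2] changes by [O(1 / sd^2)] per step, so on [|x_k| <= M] the pmf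
   is a multiple of the Gaussian density up to a factor [1 + O(1 / sd)]; Riemann sums and
   Chebyshev's inequality do the rest.  Finally, pointwise convergence of monotone
   distribution functions to the continuous [Phi] is uniform (Polya). *)

(** * Moments of the binomial distribution *)

Definition binom_expect (n : nat) (p : R) (f : nat -> R) : R :=
  sum_f_R0 (fun k => f k * binom_pmf n p k) n.

Lemma binom_pmf_pos n p k : 0 < p < 1 -> 0 < binom_pmf n p k.
Proof.
  intros hp. unfold binom_pmf.
  assert (0 < Binomial.C n k).
  { unfold Binomial.C. apply Rdiv_lt_0_compat; [|apply Rmult_lt_0_compat];
      apply INR_fact_lt_0. }
  assert (0 < p ^ k) by (apply pow_lt; lra).
  assert (0 < (1 - p) ^ (n - k)) by (apply pow_lt; lra).
  apply Rmult_lt_0_compat; [apply Rmult_lt_0_compat|]; assumption.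
Qed.

Lemma binom_pmf_S_0 n p : binom_pmf (S n) p 0 = (1 - p) * binom_pmf n p 0.
Proof. unfold binom_pmf. rewrite !C_n_0, !Nat.sub_0_r. simpl. ring. Qed.

Lemma binom_pmf_S_diag n p : binom_pmf (S n) p (S n) = p * binom_pmf n p n.
Proof. unfold binom_pmf. rewrite !C_n_n, !Nat.sub_diag. simpl. ring. Qed.

Lemma binom_pmf_S_S n p k : (k < n)%nat ->
  binom_pmf (S n) p (S k) = p * binom_pmf n p k + (1 - p) * binom_pmf n p (S k).
Proof.
  intros Hk. unfold binom_pmf. rewrite <- pascal by exact Hk.
  replace (S n - S k)%nat with (S (n - S k)) by lia.
  replace (n - k)%nat with (S (n - S k)) by lia. simpl. ring.
Qed.

Lemma binom_expect_ext n p f g :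
  (forall k, f k = g k) -> binom_expect n p f = binom_expect n p g.
Proof. intros Hfg. apply sum_eq. intros k _. now rewrite Hfg. Qed.

(* Pascal's rule, after padding both sums on [0, n] to sums on [0, n+1]. *)
Lemma binom_expect_S n p f :
  binom_expect (S n) p f =
  p * binom_expect n p (fun k => f (S k)) + (1 - p) * binom_expect n p f.
Proof.
  set (shifted := fun k => match k with O => 0 | S j => f (S j) * binom_pmf n p j end).
  set (padded := fun k => if Nat.leb k n then f k * binom_pmf n p k else 0).
  assert (Hshifted : sum_f_R0 shifted (S n)
                     = sum_f_R0 (fun k => f (S k) * binom_pmf n p k) n).
  { unfold shifted. rewrite decomp_sum by lia. simpl. ring. }
  assert (Hpadded : sum_f_R0 padded (S n) = sum_f_R0 (fun k => f k * binom_pmf n p k) n).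
  { rewrite tech5. unfold padded at 2.
    rewrite (proj2 (Nat.leb_gt (S n) n)) by lia. rewrite Rplus_0_r.
    apply sum_eq. intros k Hk. unfold padded. now rewrite (proj2 (Nat.leb_le k n)). }
  unfold binom_expect. rewrite <- Hshifted, <- Hpadded, !scal_sum, <- plus_sum.
  apply sum_eq. intros [|k] Hk; unfold shifted, padded.
  - simpl. rewrite binom_pmf_S_0. ring.
  - destruct (Nat.leb (S k) n) eqn:E.
    + apply Nat.leb_le in E. rewrite binom_pmf_S_S by lia. ring.
    + apply Nat.leb_gt in E. replace k with n by lia. rewrite binom_pmf_S_diag. ring.
Qed.

Definition binom_mom1 (N p : R) := N * p.
Definition binom_mom2 (N p : R) := N * (N - 1) * p ^ 2 + N * p.
Definition binom_mom3 (N p : R) :=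
  N * (N - 1) * (N - 2) * p ^ 3 + 3 * N * (N - 1) * p ^ 2 + N * p.
Definition binom_mom4 (N p : R) :=
  N * (N - 1) * (N - 2) * (N - 3) * p ^ 4 + 6 * N * (N - 1) * (N - 2) * p ^ 3
  + 7 * N * (N - 1) * p ^ 2 + N * p.

(* Shifting [k] to [k + 1] maps a quartic to a quartic, so the induction closes. *)
Lemma binom_expect_quartic n p a0 a1 a2 a3 a4 :
  binom_expect n p
    (fun k => a0 + a1 * INR k + a2 * INR k ^ 2 + a3 * INR k ^ 3 + a4 * INR k ^ 4)
  = a0 + a1 * binom_mom1 (INR n) p + a2 * binom_mom2 (INR n) p
    + a3 * binom_mom3 (INR n) p + a4 * binom_mom4 (INR n) p.
Proof.
  revert a0 a1 a2 a3 a4. induction n as [|n IH]; intros a0 a1 a2 a3 a4.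
  - unfold binom_expect, binom_pmf, binom_mom1, binom_mom2, binom_mom3, binom_mom4.
    simpl. rewrite C_n_0. ring.
  - rewrite binom_expect_S.
    rewrite (binom_expect_ext n p _ (fun k =>
      (a0 + a1 + a2 + a3 + a4) + (a1 + 2 * a2 + 3 * a3 + 4 * a4) * INR k
      + (a2 + 3 * a3 + 6 * a4) * INR k ^ 2 + (a3 + 4 * a4) * INR k ^ 3 + a4 * INR k ^ 4))
      by (intros k; rewrite S_INR; ring).
    rewrite !IH, S_INR.
    unfold binom_mom1, binom_mom2, binom_mom3, binom_mom4. ring.
Qed.

Lemma binom_expect_const n p c : binom_expect n p (fun _ => c) = c.
Proof.
  rewrite (binom_expect_ext n p _ (fun k =>
    c + 0 * INR k + 0 * INR k ^ 2 + 0 * INR k ^ 3 + 0 * INR k ^ 4)) by (intros; ring).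
  rewrite binom_expect_quartic. ring.
Qed.

Lemma ER_closed n p :
  ER n p = 1 + INR n * p + INR n * p * (INR n * p - 1) / 2 + INR n * p * (1 - p) / 2.
Proof.
  change (ER n p) with (binom_expect n p regions).
  rewrite (binom_expect_ext n p regions (fun k =>
    1 + / 2 * INR k + / 2 * INR k ^ 2 + 0 * INR k ^ 3 + 0 * INR k ^ 4))
    by (intros; unfold regions; field).
  rewrite binom_expect_quartic.
  unfold binom_mom1, binom_mom2, binom_mom3, binom_mom4. field.
Qed.

Lemma VR_closed n p : let mu := INR n * p in let s2 := INR n * p * (1 - p) in
  VR n p = s2 * (mu + / 2) ^ 2 + s2 * (mu + / 2) * (1 - 2 * p) + s2 ^ 2 / 2
           + s2 * (1 - 6 * p * (1 - p)) / 4.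
Proof.
  intros mu s2. set (E := ER n p).
  change (VR n p) with (binom_expect n p (fun k => (regions k - E) ^ 2)).
  rewrite (binom_expect_ext n p _ (fun k =>
    (1 - E) ^ 2 + (1 - E) * INR k + (1 - E + / 4) * INR k ^ 2 + / 2 * INR k ^ 3
    + / 4 * INR k ^ 4)) by (intros; unfold regions; field).
  rewrite binom_expect_quartic. unfold E. rewrite ER_closed.
  unfold binom_mom1, binom_mom2, binom_mom3, binom_mom4, mu, s2. field.
Qed.

(** * The Gaussian integral *)

Definition gauss (t : R) : R := exp (- t ^ 2 / 2).
Definition gauss_int (x : R) : R := RInt gauss 0 x.

Lemma ex_derive_continuous_R (f : R -> R) x : ex_derive f x -> continuous f x.
Proof. exact (@ex_derive_continuous R_AbsRing R_NormedModule f x). Qed.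

Lemma ex_RInt_continuous_R (f : R -> R) a b :
  (forall x, continuous f x) -> ex_RInt f a b.
Proof. intros Hf. apply (@ex_RInt_continuous R_CompleteNormedModule). intros; apply Hf. Qed.

Lemma exp_le_exp x y : x <= y -> exp x <= exp y.
Proof.
  intros [Hlt|Heq]; [left; now apply exp_increasing | right; now rewrite Heq].
Qed.

Lemma gauss_derive x : is_derive gauss x (- x * gauss x).
Proof.
  unfold gauss. auto_derive; [easy|].
  replace (- (x * (x * 1)) * / 2) with (- x ^ 2 / 2) by (unfold Rdiv; ring). field.
Qed.

Lemma gauss_continuous x : continuous gauss x.
Proof. apply ex_derive_continuous_R. eexists. apply gauss_derive. Qed.

Lemma gauss_pos x : 0 < gauss x.
Proof. apply exp_pos. Qed.

Lemma gauss_le_1 x : gauss x <= 1.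
Proof.
  unfold gauss. rewrite <- exp_0. apply exp_le_exp. nra.
Qed.

Lemma ex_RInt_gauss a b : ex_RInt gauss a b.
Proof. apply ex_RInt_continuous_R, gauss_continuous. Qed.

Lemma gauss_int_derive x : is_derive gauss_int x (gauss x).
Proof.
  apply (is_derive_RInt gauss gauss_int 0 x).
  - apply filter_forall. intros b. apply (@RInt_correct R_CompleteNormedModule), ex_RInt_gauss.
  - apply gauss_continuous.
Qed.

Lemma RInt_gauss a b : RInt gauss a b = gauss_int b - gauss_int a.
Proof.
  assert (H := RInt_Chasles gauss 0 a b (ex_RInt_gauss 0 a) (ex_RInt_gauss a b)).
  unfold plus in H; simpl in H. unfold gauss_int. lra.
Qed.

Lemma gauss_int_0 : gauss_int 0 = 0.
Proof. unfold gauss_int. now rewrite RInt_point. Qed.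

Lemma gauss_int_incr a b : a <= b -> 0 <= gauss_int b - gauss_int a <= b - a.
Proof.
  intros Hab. rewrite <- RInt_gauss. split.
  - apply RInt_ge_0; [exact Hab | apply ex_RInt_gauss | intros; left; apply gauss_pos].
  - assert (Habs : Rabs (RInt gauss a b) <= (b - a) * 1).
    { apply abs_RInt_le_const; [exact Hab | apply ex_RInt_gauss |].
      intros t _. rewrite Rabs_pos_eq by (left; apply gauss_pos). apply gauss_le_1. }
    apply Rabs_le_between in Habs. lra.
Qed.

Lemma gauss_int_scale x : gauss_int x = x * RInt (fun s => gauss (x * s)) 0 1.
Proof.
  unfold gauss_int.
  assert (Hsub := RInt_comp_lin gauss x 0 0 1).
  replace (x * 0 + 0) with 0 in Hsub by ring. replace (x * 1 + 0) with x in Hsub by ring.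
  rewrite <- Hsub by apply ex_RInt_gauss.
  change (x * RInt (fun s => gauss (x * s)) 0 1)
    with (scal x (RInt (fun s => gauss (x * s)) 0 1)).
  rewrite <- RInt_scal.
  - apply RInt_ext. intros s _. rewrite Rplus_0_r. reflexivity.
  - apply ex_RInt_continuous_R. intros s.
    apply (continuous_comp (fun s => x * s) gauss); [|apply gauss_continuous].
    apply ex_derive_continuous_R. auto_derive. easy.
Qed.

Lemma gauss_int_opp x : gauss_int (- x) = - gauss_int x.
Proof.
  rewrite (gauss_int_scale (- x)), (gauss_int_scale x).
  rewrite (RInt_ext (fun s => gauss (- x * s)) (fun s => gauss (x * s))); [ring|].
  intros s _. unfold gauss. replace ((- x * s) ^ 2) with ((x * s) ^ 2) by ring.
  reflexivity.
Qed.

Definition gauss_K_integrand (x s : R) : R := exp (- (x ^ 2 * (1 + s ^ 2)) / 2) / (1 + s ^ 2).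
Definition gauss_K (x : R) : R := RInt (gauss_K_integrand x) 0 1.

Definition gauss_K_integrand_dx (x s : R) : R := - x * exp (- (x ^ 2 * (1 + s ^ 2)) / 2).

Lemma gauss_K_integrand_derive x s :
  is_derive (fun z => gauss_K_integrand z s) x (gauss_K_integrand_dx x s).
Proof.
  assert (Hs : 0 < 1 + s ^ 2) by nra.
  unfold gauss_K_integrand, gauss_K_integrand_dx. auto_derive; [lra|].
  replace (- (x * (x * 1) * (1 + s * (s * 1))) * / 2) with (- (x ^ 2 * (1 + s ^ 2)) / 2)
    by (unfold Rdiv; ring).
  field. lra.
Qed.

Lemma ex_RInt_gauss_K_integrand x a b : ex_RInt (gauss_K_integrand x) a b.
Proof.
  apply ex_RInt_continuous_R. intros s. apply ex_derive_continuous_R.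
  unfold gauss_K_integrand. auto_derive. nra.
Qed.

Lemma gauss_K_integrand_dx_continuity_2d x s :
  continuity_2d_pt gauss_K_integrand_dx x s.
Proof.
  unfold gauss_K_integrand_dx.
  apply continuity_2d_pt_mult.
  - apply continuity_2d_pt_opp, continuity_2d_pt_id1.
  - apply (continuity_1d_2d_pt_comp exp (fun u v => - (u ^ 2 * (1 + v ^ 2)) / 2)).
    + apply derivable_continuous_pt, derivable_exp.
    + apply (continuity_2d_pt_ext (fun u v => - (u * u * (1 + v * v)) * / 2)).
      { intros; simpl; unfold Rdiv; ring. }
      apply continuity_2d_pt_mult; [|apply continuity_2d_pt_const].
      apply continuity_2d_pt_opp.
      apply continuity_2d_pt_mult;
        [apply continuity_2d_pt_mult; apply continuity_2d_pt_id1|].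
      apply continuity_2d_pt_plus; [apply continuity_2d_pt_const|].
      apply continuity_2d_pt_mult; apply continuity_2d_pt_id2.
Qed.

Lemma gauss_K_derive x : is_derive gauss_K x (RInt (gauss_K_integrand_dx x) 0 1).
Proof.
  assert (Hd : forall t, Derive (fun u => gauss_K_integrand u t) x = gauss_K_integrand_dx x t)
    by (intros t; apply is_derive_unique, gauss_K_integrand_derive).
  rewrite (RInt_ext _ (fun t => Derive (fun u => gauss_K_integrand u t) x))
    by (intros t _; now rewrite Hd).
  apply is_derive_RInt_param.
  - apply filter_forall. intros y t _. eexists. apply gauss_K_integrand_derive.
  - intros t _. apply (continuity_2d_pt_ext gauss_K_integrand_dx).
    + intros u v. symmetry. apply is_derive_unique, gauss_K_integrand_derive.
    + apply gauss_K_integrand_dx_continuity_2d.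
  - apply filter_forall. intros; apply ex_RInt_gauss_K_integrand.
Qed.

(* The classical evaluation of the Gaussian integral: [gauss_int ^ 2 + 2 gauss_K] has
   derivative [0] (substitute [t = x s] in [gauss_int]) and equals [2 atan 1] at [0]. *)
Lemma gauss_int_sq_add_K_derive x :
  is_derive (fun x => gauss_int x ^ 2 + 2 * gauss_K x) x 0.
Proof.
  set (E := fun s => x * exp (- (x ^ 2 * (1 + s ^ 2)) / 2)).
  assert (HE : ex_RInt E 0 1).
  { apply ex_RInt_continuous_R. intros s. apply ex_derive_continuous_R.
    unfold E. auto_derive. easy. }
  assert (HK : RInt (gauss_K_integrand_dx x) 0 1 = - RInt E 0 1).
  { change (- RInt E 0 1) with (opp (RInt E 0 1)).
    rewrite <- RInt_opp by exact HE. apply RInt_ext. intros s _.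
    unfold E, gauss_K_integrand_dx, opp; simpl. ring. }
  assert (HG : gauss_int x * gauss x = RInt E 0 1).
  { rewrite gauss_int_scale.
    transitivity (scal (x * gauss x) (RInt (fun s => gauss (x * s)) 0 1));
      [unfold scal; simpl; unfold mult; simpl; ring|].
    rewrite <- RInt_scal.
    - apply RInt_ext. intros s _. unfold scal, E, gauss; simpl; unfold mult; simpl.
      rewrite Rmult_assoc, <- exp_plus. do 2 f_equal. field.
    - apply ex_RInt_continuous_R. intros s.
      apply (continuous_comp (fun s => x * s) gauss); [|apply gauss_continuous].
      apply ex_derive_continuous_R. auto_derive. easy. }
  replace 0 with (INR 2 * gauss x * gauss_int x ^ 1 + 2 * RInt (gauss_K_integrand_dx x) 0 1)
    by (rewrite HK, <- HG; simpl; ring).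
  apply (is_derive_plus (fun x => gauss_int x ^ 2) (fun x => 2 * gauss_K x)).
  - apply is_derive_pow, gauss_int_derive.
  - apply is_derive_scal, gauss_K_derive.
Qed.

Lemma gauss_K_0 : gauss_K 0 = PI / 4.
Proof.
  unfold gauss_K.
  rewrite (RInt_ext _ (fun s => / (1 + s ^ 2))).
  2: { intros s _. unfold gauss_K_integrand.
       replace (- (0 ^ 2 * (1 + s ^ 2)) / 2) with 0 by field.
       rewrite exp_0. unfold Rdiv. apply Rmult_1_l. }
  assert (Hatan : is_RInt (fun s => / (1 + s ^ 2)) 0 1 (minus (atan 1) (atan 0))).
  { apply (is_RInt_derive atan).
    - intros. apply is_derive_Reals, derivable_pt_lim_atan.
    - intros. apply ex_derive_continuous_R. auto_derive. nra. }
  rewrite (is_RInt_unique _ _ _ _ Hatan), atan_1, atan_0.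
  unfold minus, plus, opp; simpl. ring.
Qed.

Lemma gauss_int_sq x : gauss_int x ^ 2 = PI / 2 - 2 * gauss_K x.
Proof.
  set (h := fun x => gauss_int x ^ 2 + 2 * gauss_K x).
  assert (Hconst : h x = h 0).
  { destruct (MVT_gen h 0 x (fun _ => 0)) as [c [_ Hc]]; [| |lra].
    - intros; apply gauss_int_sq_add_K_derive.
    - intros. apply continuity_pt_filterlim, ex_derive_continuous_R.
      eexists. apply gauss_int_sq_add_K_derive. }
  unfold h in Hconst. rewrite gauss_int_0, gauss_K_0 in Hconst. lra.
Qed.

Lemma gauss_K_bounds x : 0 <= gauss_K x <= exp (- x ^ 2 / 2).
Proof.
  unfold gauss_K. split.
  - apply RInt_ge_0; [lra | apply ex_RInt_gauss_K_integrand |].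
    intros s _. unfold gauss_K_integrand.
    apply Rle_mult_inv_pos; [left; apply exp_pos | nra].
  - replace (exp (- x ^ 2 / 2)) with (RInt (fun _ => exp (- x ^ 2 / 2)) 0 1)
      by (rewrite RInt_const; unfold scal; simpl; unfold mult; simpl; ring).
    apply RInt_le; [lra | apply ex_RInt_gauss_K_integrand
                   | apply ex_RInt_continuous_R; intros; apply continuous_const |].
    intros s _. unfold gauss_K_integrand.
    assert (Hs2 : 0 <= s ^ 2) by apply pow2_ge_0.
    assert (Hexp : exp (- (x ^ 2 * (1 + s ^ 2)) / 2) <= exp (- x ^ 2 / 2)).
    { apply exp_le_exp. assert (0 <= x ^ 2 * s ^ 2) by (apply Rmult_le_pos; apply pow2_ge_0).
      lra. }
    assert (Hinv : / (1 + s ^ 2) <= 1) by (rewrite <- Rinv_1; apply Rinv_le_contravar; lra).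
    assert (0 < exp (- (x ^ 2 * (1 + s ^ 2)) / 2)) by apply exp_pos.
    unfold Rdiv. nra.
Qed.

Definition gauss_half : R := sqrt (2 * PI) / 2.

Lemma sqrt_2PI_ge_2 : 2 <= sqrt (2 * PI).
Proof.
  rewrite <- (sqrt_square 2) at 1 by lra. apply sqrt_le_1_alt.
  assert (H := PI2_3_2). lra.
Qed.

Lemma sqrt_2PI_sq : sqrt (2 * PI) * sqrt (2 * PI) = 2 * PI.
Proof. apply sqrt_sqrt. assert (H := PI_RGT_0). lra. Qed.

Lemma gauss_half_ge_1 : 1 <= gauss_half.
Proof. unfold gauss_half. assert (H := sqrt_2PI_ge_2). lra. Qed.

Lemma gauss_int_nonneg x : 0 <= x -> 0 <= gauss_int x.
Proof. intros Hx. assert (H := gauss_int_incr 0 x Hx). rewrite gauss_int_0 in H. lra. Qed.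

Lemma gauss_int_tail x :
  0 <= x -> 0 <= gauss_half - gauss_int x <= 2 * exp (- x ^ 2 / 2) / gauss_half.
Proof.
  intros Hx.
  assert (Hpos := gauss_int_nonneg x Hx).
  assert (Hsq := gauss_int_sq x). assert (HK := gauss_K_bounds x).
  assert (Hh := gauss_half_ge_1).
  assert (Hh2 : gauss_half ^ 2 = PI / 2).
  { unfold gauss_half.
    replace ((sqrt (2 * PI) / 2) ^ 2) with (sqrt (2 * PI) * sqrt (2 * PI) / 4) by field.
    rewrite sqrt_2PI_sq. field. }
  assert (Hle : gauss_int x <= gauss_half) by nra.
  assert (Hfact : (gauss_half - gauss_int x) * (gauss_half + gauss_int x) = 2 * gauss_K x)
    by nra.
  split; [lra|].
  apply (Rmult_le_reg_r gauss_half); [lra|].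
  unfold Rdiv. rewrite Rmult_assoc, Rinv_l by lra. nra.
Qed.

Lemma gauss_int_abs_le x : Rabs (gauss_int x) <= gauss_half.
Proof.
  destruct (Rle_dec 0 x) as [Hx|Hx].
  - assert (H := gauss_int_tail x Hx).
    assert (Hpos := gauss_int_nonneg x Hx).
    rewrite Rabs_pos_eq; lra.
  - assert (H := gauss_int_tail (- x) ltac:(lra)).
    assert (Hpos := gauss_int_nonneg (- x) ltac:(lra)).
    rewrite gauss_int_opp in *. rewrite Rabs_left1; lra.
Qed.

Lemma exp_neg_half_sq_le x : x <> 0 -> exp (- x ^ 2 / 2) <= 2 / x ^ 2.
Proof.
  intros Hx. assert (Hx2 : 0 < x ^ 2) by (apply pow2_gt_0; exact Hx).
  assert (Hineq := exp_ineq1_le (x ^ 2 / 2)).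
  assert (Hprod : exp (x ^ 2 / 2) * exp (- x ^ 2 / 2) = 1)
    by (rewrite <- exp_plus, <- exp_0; f_equal; field).
  assert (0 < exp (- x ^ 2 / 2)) by apply exp_pos.
  apply (Rmult_le_reg_r (x ^ 2)); [lra|].
  unfold Rdiv. rewrite Rmult_assoc, Rinv_l, Rmult_1_r by lra. nra.
Qed.

Definition normal_cdf (w : R) : R := / 2 + gauss_int w / sqrt (2 * PI).

Lemma normal_cdf_left_tail x : x <= 0 -> 0 <= normal_cdf x <= exp (- x ^ 2 / 2).
Proof.
  intros Hx. assert (H := gauss_int_tail (- x) ltac:(lra)).
  rewrite gauss_int_opp in H. replace ((- x) ^ 2) with (x ^ 2) in H by ring.
  assert (Hs := sqrt_2PI_ge_2). assert (Hpi := PI2_3_2).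
  assert (E : normal_cdf x = (gauss_half + gauss_int x) / sqrt (2 * PI))
    by (unfold normal_cdf, gauss_half; field; lra).
  assert (Hprod : gauss_half * sqrt (2 * PI) = PI)
    by (unfold gauss_half; rewrite Rmult_comm, Rmult_div_assoc, sqrt_2PI_sq; field).
  assert (0 < exp (- x ^ 2 / 2)) by apply exp_pos.
  rewrite E. split; [apply Rle_mult_inv_pos; lra|].
  apply (Rle_trans _ (2 * exp (- x ^ 2 / 2) / gauss_half / sqrt (2 * PI))).
  - unfold Rdiv. apply Rmult_le_compat_r; [left; apply Rinv_0_lt_compat; lra | lra].
  - unfold Rdiv. rewrite Rmult_assoc, <- Rinv_mult, Hprod.
    apply (Rmult_le_reg_r PI); [lra|]. rewrite Rmult_assoc, Rinv_l by lra. nra.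
Qed.

Lemma normal_cdf_derive x : is_derive normal_cdf x (std_normal_density x).
Proof.
  unfold normal_cdf, std_normal_density.
  apply (is_derive_ext (fun w => / 2 + / sqrt (2 * PI) * gauss_int w));
    [intros t; unfold Rdiv; apply Rplus_eq_compat_l, Rmult_comm|].
  replace (exp (- x ^ 2 / 2) / sqrt (2 * PI)) with (0 + / sqrt (2 * PI) * gauss x)
    by (unfold gauss, Rdiv; ring).
  apply (is_derive_plus (fun _ => / 2)); [auto_derive; easy|].
  apply is_derive_scal, gauss_int_derive.
Qed.

Lemma normal_cdf_lim_m_infty : filterlim normal_cdf (Rbar_locally m_infty) (locally 0).
Proof.
  apply filterlim_locally. intros eps.
  assert (He := cond_pos eps).
  exists (- (2 / eps + 1)). intros x Hx.
  assert (0 < 2 / eps) by (apply Rdiv_lt_0_compat; lra).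
  assert (Htail := normal_cdf_left_tail x ltac:(lra)).
  assert (Hexp := exp_neg_half_sq_le x ltac:(lra)).
  assert (Hx2 : 2 / eps < x ^ 2) by nra.
  assert (2 / x ^ 2 < eps).
  { apply (Rmult_lt_reg_r (x ^ 2)); [nra|].
    unfold Rdiv at 1. rewrite Rmult_assoc, Rinv_l, Rmult_1_r by nra.
    apply (Rmult_lt_reg_l (/ eps)); [apply Rinv_0_lt_compat; lra|].
    rewrite <- Rmult_assoc, Rinv_l, Rmult_1_l by lra. unfold Rdiv in Hx2. lra. }
  change (Rabs (normal_cdf x - 0) < eps).
  rewrite Rminus_0_r, Rabs_pos_eq; lra.
Qed.

Lemma Phi_normal_cdf w : Phi w = normal_cdf w.
Proof.
  unfold Phi. apply is_RInt_gen_unique.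
  assert (HD : forall x, Derive normal_cdf x = std_normal_density x)
    by (intros; apply is_derive_unique, normal_cdf_derive).
  replace (normal_cdf w) with (normal_cdf w - 0) by ring.
  apply (is_RInt_gen_ext (Derive normal_cdf)).
  { apply filter_forall. intros ab x _. apply HD. }
  apply is_RInt_gen_Derive.
  - apply filter_forall. intros ab x _. eexists; apply normal_cdf_derive.
  - apply filter_forall. intros ab x _.
    apply (continuous_ext std_normal_density); [intros; symmetry; apply HD|].
    apply ex_derive_continuous_R. unfold std_normal_density. auto_derive.
    assert (H := sqrt_2PI_ge_2). lra.
  - apply normal_cdf_lim_m_infty.
  - apply filterlim_locally. intros eps. apply ball_center.
Qed.

Lemma normal_cdf_incr a b : a <= b -> 0 <= normal_cdf b - normal_cdf a <= (b - a) / 2.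
Proof.
  intros Hab. assert (H := gauss_int_incr a b Hab). assert (Hs := sqrt_2PI_ge_2).
  replace (normal_cdf b - normal_cdf a) with ((gauss_int b - gauss_int a) / sqrt (2 * PI))
    by (unfold normal_cdf; field; lra).
  split; [apply Rle_mult_inv_pos; lra|].
  unfold Rdiv. apply (Rle_trans _ ((b - a) * / sqrt (2 * PI))).
  - apply Rmult_le_compat_r; [left; apply Rinv_0_lt_compat|]; lra.
  - apply Rmult_le_compat_l; [lra|]. apply Rinv_le_contravar; lra.
Qed.

Lemma normal_cdf_opp x : normal_cdf (- x) = 1 - normal_cdf x.
Proof.
  unfold normal_cdf. rewrite gauss_int_opp. field.
  assert (H := sqrt_2PI_ge_2). lra.
Qed.

Lemma normal_cdf_range x : 0 <= normal_cdf x <= 1.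
Proof.
  assert (Hexp : forall y, exp (- y ^ 2 / 2) <= 1)
    by (intros y; rewrite <- exp_0; apply exp_le_exp; nra).
  destruct (Rle_dec x 0) as [Hx|Hx].
  - assert (H := normal_cdf_left_tail x Hx). specialize (Hexp x). lra.
  - assert (H := normal_cdf_left_tail (- x) ltac:(lra)).
    rewrite normal_cdf_opp in H. specialize (Hexp (- x)). lra.
Qed.

(** * Riemann sums over a grid *)

Definition le_ind (t a : R) : R := if Rle_dec t a then 1 else 0.
Definition ioc_ind (u v t : R) : R :=
  if Rlt_dec u t then (if Rle_dec t v then 1 else 0) else 0.
Definition clamp (u v t : R) : R := Rmin (Rmax t u) v.

Definition nondecr_1_lipschitz (H : R -> R) : Prop :=
  forall x y, x <= y -> 0 <= H y - H x <= y - x.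

Lemma ioc_ind_range u v t : 0 <= ioc_ind u v t <= 1.
Proof. unfold ioc_ind. destruct (Rlt_dec u t); destruct (Rle_dec t v); lra. Qed.

Lemma le_ind_range t a : 0 <= le_ind t a <= 1.
Proof. unfold le_ind. destruct (Rle_dec t a); lra. Qed.

Lemma sum_f_R0_telescope (f : nat -> R) n :
  sum_f_R0 (fun k => f (S k) - f k) n = f (S n) - f 0%nat.
Proof. induction n as [|n IH]; simpl; [|rewrite IH]; ring. Qed.

Lemma sum_f_R0_mult_r (f : nat -> R) n c :
  sum_f_R0 f n * c = sum_f_R0 (fun k => f k * c) n.
Proof. rewrite Rmult_comm. apply scal_sum. Qed.

Lemma sum_f_R0_abs_le (f g : nat -> R) n :
  (forall k, (k <= n)%nat -> Rabs (f k) <= g k) -> Rabs (sum_f_R0 f n) <= sum_f_R0 g n.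
Proof.
  intros H. eapply Rle_trans; [apply sum_f_R0_triangle|]. apply sum_Rle. intros; now apply H.
Qed.

(* The error of one step is charged to the steps at which [a] crosses [u] or [v]. *)
Lemma ioc_ind_increment_error (H : R -> R) u v a h :
  nondecr_1_lipschitz H -> u <= v -> 0 < h ->
  Rabs (ioc_ind u v a * (H (a + h) - H a) - (H (clamp u v (a + h)) - H (clamp u v a)))
  <= h * ((le_ind a v - le_ind (a + h) v) + (le_ind a u - le_ind (a + h) u)).
Proof.
  intros HH Huv Hh. unfold ioc_ind, le_ind, clamp.
  destruct (Rle_dec a u) as [au|au].
  - destruct (Rlt_dec u a); [lra|].
    rewrite (Rmax_right a u), (Rmin_left u v) by lra.
    destruct (Rle_dec a v); [|lra].
    destruct (Rle_dec (a + h) u).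
    + rewrite (Rmax_right (a + h) u), (Rmin_left u v) by lra.
      destruct (Rle_dec (a + h) v); [|lra].
      rewrite Rminus_diag, Rmult_0_l, Rminus_diag, Rabs_R0. lra.
    + rewrite (Rmax_left (a + h) u) by lra.
      assert (Hc : u <= Rmin (a + h) v <= a + h)
        by (unfold Rmin; destruct (Rle_dec (a + h) v); lra).
      assert (HD := HH u (Rmin (a + h) v) ltac:(lra)).
      rewrite Rmult_0_l, Rminus_0_l, Rabs_Ropp, Rabs_pos_eq by lra.
      destruct (Rle_dec (a + h) v); nra.
  - destruct (Rlt_dec u a); [|lra].
    rewrite (Rmax_left a u), (Rmax_left (a + h) u) by lra.
    destruct (Rle_dec (a + h) u); [lra|].
    destruct (Rle_dec a v) as [av|av].
    + rewrite (Rmin_left a v) by lra.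
      destruct (Rle_dec (a + h) v).
      * rewrite (Rmin_left (a + h) v) by lra.
        replace (1 * (H (a + h) - H a) - (H (a + h) - H a)) with 0 by ring.
        rewrite Rabs_R0. lra.
      * rewrite (Rmin_right (a + h) v) by lra.
        assert (HD := HH v (a + h) ltac:(lra)).
        replace (1 * (H (a + h) - H a) - (H v - H a)) with (H (a + h) - H v) by ring.
        rewrite Rabs_pos_eq by lra. lra.
    + rewrite (Rmin_right a v), (Rmin_right (a + h) v) by lra.
      destruct (Rle_dec (a + h) v); [lra|].
      rewrite Rmult_0_l, Rminus_diag, Rminus_0_l, Rabs_Ropp, Rabs_R0. lra.
Qed.

(* Clamping to [u, v] turns the sum into a telescoping one with value [H v - H u]. *)
Lemma grid_sum_ioc_approx (H : R -> R) (x0 h u v : R) (n : nat) :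
  nondecr_1_lipschitz H -> 0 < h -> u <= v -> x0 <= u -> v <= x0 + INR n * h ->
  Rabs (sum_f_R0 (fun k => ioc_ind u v (x0 + INR k * h)
                           * (H (x0 + INR (S k) * h) - H (x0 + INR k * h))) n
        - (H v - H u)) <= 2 * h.
Proof.
  intros HH Hh Huv Hx0 Hxn.
  set (xs := fun k => x0 + INR k * h).
  assert (Hxs : forall k, xs (S k) = xs k + h) by (intros; unfold xs; rewrite S_INR; ring).
  assert (Hfirst : xs 0%nat = x0) by (unfold xs; simpl; ring).
  assert (Hlast : v < xs (S n)) by (rewrite Hxs; unfold xs; lra).
  assert (Htele : sum_f_R0 (fun k => H (clamp u v (xs (S k))) - H (clamp u v (xs k))) n
                  = H v - H u).
  { rewrite (sum_f_R0_telescope (fun k => H (clamp u v (xs k)))). unfold clamp.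
    rewrite Hfirst, (Rmax_left (xs (S n)) u), (Rmin_right _ v), (Rmax_right x0 u),
      (Rmin_left u v) by lra.
    reflexivity. }
  set (crossings := fun k => - (le_ind (xs k) v + le_ind (xs k) u)).
  assert (Hcross : sum_f_R0 (fun k => crossings (S k) - crossings k) n <= 2).
  { rewrite sum_f_R0_telescope. unfold crossings, le_ind.
    destruct (Rle_dec (xs (S n)) v); [lra|]. destruct (Rle_dec (xs (S n)) u); [lra|].
    destruct (Rle_dec (xs 0%nat) v); destruct (Rle_dec (xs 0%nat) u); lra. }
  rewrite <- Htele, <- minus_sum.
  eapply Rle_trans.
  { apply (sum_f_R0_abs_le _ (fun k => (crossings (S k) - crossings k) * h)).
    intros k _. unfold crossings. fold (xs k) (xs (S k)). rewrite Hxs.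
    eapply Rle_trans; [apply ioc_ind_increment_error; assumption|]. right. ring. }
  rewrite <- scal_sum. nra.
Qed.

Lemma gauss_lipschitz a b : Rabs (gauss b - gauss a) <= Rabs (b - a).
Proof.
  destruct (MVT_gen gauss a b (fun x => - x * gauss x)) as [c [_ Hc]].
  - intros; apply gauss_derive.
  - intros; apply continuity_pt_filterlim, gauss_continuous.
  - assert (Hslope : Rabs c * gauss c <= 1).
    { unfold gauss. assert (Hineq := exp_ineq1_le (c ^ 2 / 2)).
      assert (Hprod : exp (c ^ 2 / 2) * exp (- c ^ 2 / 2) = 1)
        by (rewrite <- exp_plus, <- exp_0; f_equal; field).
      assert (0 < exp (- c ^ 2 / 2)) by apply exp_pos.
      assert (Hc2 : Rabs c * Rabs c = c ^ 2) by (rewrite <- Rabs_mult, Rabs_pos_eq; nra).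
      assert (0 <= Rabs c) by apply Rabs_pos.
      nra. }
    rewrite Hc, Rabs_mult, Rabs_mult, Rabs_Ropp, (Rabs_pos_eq (gauss c))
      by (left; apply gauss_pos).
    assert (0 <= Rabs (b - a)) by apply Rabs_pos. nra.
Qed.

Lemma gauss_riemann_step a h :
  0 < h -> Rabs (gauss a * h - (gauss_int (a + h) - gauss_int a)) <= h * h.
Proof.
  intros Hh. rewrite <- RInt_gauss.
  assert (Hconst : RInt (fun _ => gauss a) a (a + h) = gauss a * h)
    by (rewrite RInt_const; unfold scal; simpl; unfold mult; simpl; ring).
  assert (Hdiff : RInt gauss a (a + h) - gauss a * h = RInt (fun t => gauss t - gauss a) a (a + h)).
  { assert (H := RInt_minus gauss (fun _ => gauss a) a (a + h) (ex_RInt_gauss _ _)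
                   (ex_RInt_const _ _ _)).
    unfold minus, plus, opp in H; simpl in H.
    change (RInt (fun t => gauss t - gauss a) a (a + h)) with
           (RInt (fun t => gauss t + - gauss a) a (a + h)).
    rewrite H, Hconst. ring. }
  replace (gauss a * h - RInt gauss a (a + h)) with (- (RInt gauss a (a + h) - gauss a * h))
    by ring.
  rewrite Rabs_Ropp, Hdiff. replace (h * h) with ((a + h - a) * h) by ring.
  apply abs_RInt_le_const; [lra | |].
  - apply ex_RInt_continuous_R. intros t.
    apply ex_derive_continuous_R. unfold gauss. auto_derive. easy.
  - intros t Ht. eapply Rle_trans; [apply gauss_lipschitz|]. rewrite Rabs_pos_eq; lra.
Qed.

(** * De Moivre-Laplace *)

Lemma ln_1p_approx u : Rabs u <= / 2 -> Rabs (ln (1 + u) - u) <= 2 * u ^ 2.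
Proof.
  intros Hu. apply Rabs_le_between in Hu.
  assert (ln_le : forall z, 0 < z -> ln z <= z - 1)
    by (intros z Hz; assert (H := exp_ineq1_le (ln z)); rewrite exp_ln in H; lra).
  assert (Hup : ln (1 + u) <= u) by (assert (H := ln_le (1 + u) ltac:(lra)); lra).
  assert (Hlow : u / (1 + u) <= ln (1 + u)).
  { assert (H := ln_le (/ (1 + u)) ltac:(apply Rinv_0_lt_compat; lra)).
    rewrite ln_Rinv in H by lra.
    replace (u / (1 + u)) with (- (/ (1 + u) - 1)) by (field; lra). lra. }
  assert (Hquad : u - 2 * u ^ 2 <= u / (1 + u)).
  { apply (Rmult_le_reg_r (1 + u)); [lra|].
    unfold Rdiv. rewrite Rmult_assoc, Rinv_l, Rmult_1_r by lra. nra. }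
  apply Rabs_le_between. assert (0 <= u ^ 2) by apply pow2_ge_0. lra.
Qed.

Lemma exp_sub_1_bound t e : Rabs t <= e -> e <= / 2 -> Rabs (exp t - 1) <= 2 * e.
Proof.
  intros Ht He. apply Rabs_le_between in Ht. apply Rabs_le_between.
  assert (H1 := exp_ineq1_le t). assert (H2 := exp_ineq1_le (- e)).
  assert (exp t <= exp e) by (apply exp_le_exp; lra).
  assert (exp e * exp (- e) = 1) by (rewrite <- exp_plus, <- exp_0; f_equal; ring).
  assert (exp e <= 1 + 2 * e) by (assert (0 < exp e) by apply exp_pos; nra).
  lra.
Qed.

Lemma increments_bound (f : nat -> R) d m k : (m <= k)%nat ->
  (forall j, (m <= j < k)%nat -> Rabs (f (S j) - f j) <= d) ->
  Rabs (f k - f m) <= INR (k - m) * d.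
Proof.
  intros Hmk Hd. induction k as [|k IH].
  - replace m with 0%nat by lia. simpl. rewrite Rminus_diag, Rabs_R0. lra.
  - destruct (Nat.eq_dec m (S k)) as [->|Hne].
    + rewrite Nat.sub_diag, Rminus_diag, Rabs_R0. simpl. lra.
    + replace (S k - m)%nat with (S (k - m)) by lia. rewrite S_INR.
      replace (f (S k) - f m) with ((f (S k) - f k) + (f k - f m)) by ring.
      eapply Rle_trans; [apply Rabs_triang|].
      assert (Rabs (f (S k) - f k) <= d) by (apply Hd; lia).
      assert (Rabs (f k - f m) <= INR (k - m) * d) by (apply IH; [lia | intros; apply Hd; lia]).
      lra.
Qed.

Lemma scaled_bound c y s B : 0 <= c <= 1 -> Rabs y <= B -> 0 < s -> 2 * B <= s ->
  Rabs (c * y / s) <= / 2 /\ (c * y / s) ^ 2 <= B ^ 2 / (s * s).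
Proof.
  intros Hc Hy Hs HB.
  assert (Hcy : Rabs (c * y) <= B).
  { rewrite Rabs_mult, (Rabs_pos_eq c) by lra.
    assert (0 <= Rabs y) by apply Rabs_pos. nra. }
  assert (Habs : Rabs (c * y / s) = Rabs (c * y) / s)
    by (unfold Rdiv; rewrite Rabs_mult, (Rabs_pos_eq (/ s)) by (left; apply Rinv_0_lt_compat; lra);
        reflexivity).
  split.
  - rewrite Habs. apply (Rmult_le_reg_r s); [lra|].
    unfold Rdiv. rewrite Rmult_assoc, Rinv_l by lra. lra.
  - rewrite <- pow2_abs, Habs.
    replace ((Rabs (c * y) / s) ^ 2) with (Rabs (c * y) ^ 2 / (s * s)) by (field; lra).
    unfold Rdiv. apply Rmult_le_compat_r; [left; apply Rinv_0_lt_compat; nra|].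
    apply pow_incr. split; [apply Rabs_pos | exact Hcy].
Qed.

Definition binom_mean (n : nat) (p : R) : R := INR n * p.
Definition binom_sd (n : nat) (p : R) : R := sqrt (INR n * p * (1 - p)).
Definition std_score (n : nat) (p : R) (k : nat) : R :=
  (INR k - binom_mean n p) / binom_sd n p.

Definition binom_std_cdf (n : nat) (p x : R) : R :=
  sum_f_R0 (fun k => le_ind (std_score n p k) x * binom_pmf n p k) n.
Definition binom_std_ioc (n : nat) (p u v : R) : R :=
  sum_f_R0 (fun k => ioc_ind u v (std_score n p k) * binom_pmf n p k) n.
Definition gauss_std_ioc (n : nat) (p u v : R) : R :=
  sum_f_R0 (fun k => ioc_ind u v (std_score n p k) * gauss (std_score n p k)) n.

Definition local_const (M : R) : R := (M + 1) * (1 + 4 * (M + 2) ^ 2) + 1.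

Section LocalLimit.

Variables (n : nat) (p : R).
Hypothesis hp : 0 < p < 1.
Hypothesis hsd : 1 <= binom_sd n p.

Local Notation mu := (binom_mean n p).
Local Notation sd := (binom_sd n p).
Local Notation z := (std_score n p).
Local Notation pmf := (binom_pmf n p).

Lemma sd_pos : 0 < sd.
Proof. lra. Qed.

Lemma n_pos : 0 < INR n.
Proof.
  destruct n as [|n']; [|apply lt_0_INR; lia].
  exfalso. unfold binom_sd in hsd. simpl in hsd.
  rewrite !Rmult_0_l, sqrt_0 in hsd. lra.
Qed.

Lemma sd_sq : sd * sd = INR n * p * (1 - p).
Proof.
  apply sqrt_sqrt. assert (H := n_pos).
  apply Rmult_le_pos; [apply Rmult_le_pos|]; lra.
Qed.

Lemma score_affine k : INR k = mu + sd * z k.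
Proof. unfold std_score. field. apply Rgt_not_eq, sd_pos. Qed.

Lemma score_S k : z (S k) = z k + / sd.
Proof. unfold std_score. rewrite S_INR. field. apply Rgt_not_eq, sd_pos. Qed.

Lemma score_le a b : (a <= b)%nat -> z a <= z b.
Proof.
  intros Hab. apply le_INR in Hab. unfold std_score, Rdiv.
  apply Rmult_le_compat_r; [left; apply Rinv_0_lt_compat, sd_pos | lra].
Qed.

Lemma pmf_ratio k : (k < n)%nat ->
  pmf (S k) * ((INR k + 1) * (1 - p)) = pmf k * ((INR n - INR k) * p).
Proof.
  intros Hk. unfold binom_pmf. rewrite pascal_step3 by exact Hk.
  rewrite minus_INR, S_INR by lia.
  replace (n - k)%nat with (S (n - S k)) by lia. simpl pow.
  assert (0 <= INR k) by apply pos_INR. field. lra.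
Qed.

Definition log_ratio (k : nat) : R := ln (pmf k) + z k ^ 2 / 2.

Lemma log_ratio_step_eq k : (k < n)%nat ->
  let u1 := p * (- z k) / sd in
  let u2 := (1 - p) * (z k + / sd) / sd in
  log_ratio (S k) - log_ratio k
  = (ln (1 + u1) - u1) - (ln (1 + u2) - u2) + (p - / 2) / (sd * sd).
Proof.
  intros Hk u1 u2. assert (Hs := sd_pos). assert (Hs2 := sd_sq).
  assert (HkR : INR k < INR n) by (apply lt_INR; exact Hk).
  assert (Hk0 : 0 <= INR k) by apply pos_INR.
  assert (E1 : (INR n - INR k) * p = sd * sd * (1 + u1)).
  { transitivity (sd * sd - sd * p * z k); [|unfold u1; field; lra].
    rewrite (score_affine k), Hs2. unfold binom_mean. ring. }
  assert (E2 : (INR k + 1) * (1 - p) = sd * sd * (1 + u2)).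
  { transitivity (sd * sd + sd * (1 - p) * z k + (1 - p)); [|unfold u2; field; lra].
    rewrite (score_affine k), Hs2. unfold binom_mean. ring. }
  assert (Hpos1 : 0 < 1 + u1) by (assert (0 < (INR n - INR k) * p) by nra; nra).
  assert (Hpos2 : 0 < 1 + u2) by (assert (0 < (INR k + 1) * (1 - p)) by nra; nra).
  assert (Hpmf : ln (pmf (S k)) - ln (pmf k) = ln (1 + u1) - ln (1 + u2)).
  { assert (Hln := f_equal ln (pmf_ratio k Hk)). rewrite E1, E2 in Hln.
    assert (0 < pmf k) by (apply binom_pmf_pos; exact hp).
    assert (0 < pmf (S k)) by (apply binom_pmf_pos; exact hp).
    assert (0 < sd * sd) by nra.
    rewrite !ln_mult in Hln by nra. lra. }
  unfold log_ratio. rewrite score_S.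
  replace (ln (pmf (S k)) + (z k + / sd) ^ 2 / 2 - (ln (pmf k) + z k ^ 2 / 2))
    with ((ln (pmf (S k)) - ln (pmf k)) + z k / sd + / (2 * (sd * sd))) by (field; lra).
  rewrite Hpmf. unfold u1, u2. field. lra.
Qed.

Lemma log_ratio_step k Y : (k < n)%nat -> Rabs (z k) <= Y -> 2 * (Y + 1) <= sd ->
  Rabs (log_ratio (S k) - log_ratio k) <= (1 + 4 * (Y + 1) ^ 2) / (sd * sd).
Proof.
  intros Hk Hz Hs. assert (Hsd := sd_pos).
  assert (HY : 0 <= Y) by (assert (H := Rabs_pos (z k)); lra).
  assert (Hinv : 0 < / sd <= 1)
    by (split; [apply Rinv_0_lt_compat; lra | rewrite <- Rinv_1; apply Rinv_le_contravar; lra]).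
  rewrite log_ratio_step_eq by exact Hk.
  set (u1 := p * (- z k) / sd). set (u2 := (1 - p) * (z k + / sd) / sd).
  destruct (scaled_bound p (- z k) sd Y) as [Hu1 Hu1sq]; [lra | now rewrite Rabs_Ropp | lra | lra |].
  destruct (scaled_bound (1 - p) (z k + / sd) sd (Y + 1)) as [Hu2 Hu2sq];
    [lra | | lra | lra |].
  { eapply Rle_trans; [apply Rabs_triang|]. rewrite (Rabs_pos_eq (/ sd)) by lra. lra. }
  fold u1 in Hu1, Hu1sq. fold u2 in Hu2, Hu2sq.
  assert (L1 := ln_1p_approx u1 Hu1). assert (L2 := ln_1p_approx u2 Hu2).
  assert (Hc : Rabs ((p - / 2) / (sd * sd)) <= / 2 / (sd * sd)).
  { unfold Rdiv. rewrite Rabs_mult, (Rabs_pos_eq (/ (sd * sd)))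
      by (left; apply Rinv_0_lt_compat; nra).
    apply Rmult_le_compat_r; [left; apply Rinv_0_lt_compat; nra|].
    apply Rabs_le_between. lra. }
  assert (HYsq : Y ^ 2 / (sd * sd) <= (Y + 1) ^ 2 / (sd * sd)).
  { unfold Rdiv. apply Rmult_le_compat_r; [left; apply Rinv_0_lt_compat; nra | nra]. }
  assert (Hsplit : (1 + 4 * (Y + 1) ^ 2) / (sd * sd)
                   = / (sd * sd) + 4 * ((Y + 1) ^ 2 / (sd * sd))) by (field; lra).
  assert (/ 2 / (sd * sd) <= / (sd * sd))
    by (unfold Rdiv; assert (0 < / (sd * sd)) by (apply Rinv_0_lt_compat; nra); nra).
  rewrite Hsplit.
  eapply Rle_trans; [apply Rabs_triang|]. unfold Rminus at 1.
  eapply Rle_trans; [apply Rplus_le_compat_r, Rabs_triang|]. rewrite Rabs_Ropp.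
  lra.
Qed.

Lemma log_ratio_diff k m Y : (k <= n)%nat -> (m <= n)%nat -> 2 * (Y + 1) <= sd ->
  Rabs (z k) <= Y -> Rabs (z m) <= Y ->
  Rabs (log_ratio k - log_ratio m)
  <= Rabs (INR k - INR m) * ((1 + 4 * (Y + 1) ^ 2) / (sd * sd)).
Proof.
  assert (Hwalk : forall a b, (a <= b)%nat -> (b <= n)%nat -> 2 * (Y + 1) <= sd ->
            Rabs (z a) <= Y -> Rabs (z b) <= Y ->
            Rabs (log_ratio b - log_ratio a)
            <= Rabs (INR b - INR a) * ((1 + 4 * (Y + 1) ^ 2) / (sd * sd))).
  { intros a b Hab Hb Hs Ha Hb'.
    assert (HabR := le_INR a b Hab).
    rewrite (Rabs_pos_eq (INR b - INR a)), <- minus_INR by (exact Hab || lra).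
    apply increments_bound; [exact Hab|]. intros j Hj.
    apply log_ratio_step; [lia | | exact Hs].
    apply Rabs_le_between in Ha, Hb'. apply Rabs_le_between.
    assert (z a <= z j) by (apply score_le; lia).
    assert (z j <= z b) by (apply score_le; lia).
    lra. }
  intros Hk Hm Hs Hzk Hzm. destruct (Nat.le_ge_cases m k) as [Hmk|Hkm].
  - now apply Hwalk.
  - rewrite Rabs_minus_sym, (Rabs_minus_sym (INR k)). now apply Hwalk.
Qed.

Lemma mean_index_exists : exists m, (m < n)%nat /\ Rabs (z m) <= / sd.
Proof.
  assert (Hs := sd_pos). assert (Hn := n_pos).
  assert (Hmu : 0 <= mu) by (unfold binom_mean; nra).
  destruct (nfloor_ex mu Hmu) as [m Hm].
  exists m. split.
  - apply INR_lt. unfold binom_mean in Hm. nra.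
  - unfold std_score, Rdiv.
    rewrite Rabs_mult, (Rabs_pos_eq (/ sd)) by (left; apply Rinv_0_lt_compat; lra).
    rewrite <- (Rmult_1_l (/ sd)) at 2.
    apply Rmult_le_compat_r; [left; apply Rinv_0_lt_compat; lra|].
    apply Rabs_le_between. lra.
Qed.

Definition local_err (M : R) : R := local_const M / sd.

(* [log_ratio] moves by [O(1/sd^2)] per step, over the [O(sd)] steps between [k] and
   a point [m] next to the mean. *)
Lemma log_pmf_ratio_bound k m M : (k <= n)%nat -> (m < n)%nat -> 2 * (M + 2) <= sd ->
  Rabs (z m) <= / sd -> Rabs (z k) <= M ->
  Rabs (ln (pmf k) - ln (pmf m) + z k ^ 2 / 2) <= local_err M.
Proof.
  intros Hk Hm Hs Hzm Hzk. assert (Hsd := sd_pos).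
  assert (Hinv : / sd <= 1) by (rewrite <- Rinv_1; apply Rinv_le_contravar; lra).
  assert (HM : 0 <= M) by (assert (H := Rabs_pos (z k)); lra).
  set (C := 1 + 4 * (M + 1 + 1) ^ 2).
  assert (HC : 0 <= C) by (unfold C; assert (0 <= (M + 1 + 1) ^ 2) by apply pow2_ge_0; lra).
  assert (Hwalk := log_ratio_diff k m (M + 1) Hk ltac:(lia) ltac:(lra) ltac:(lra) ltac:(lra)).
  fold C in Hwalk.
  assert (Hkm : Rabs (INR k - INR m) <= sd * (M + 1)).
  { rewrite (score_affine k), (score_affine m).
    replace (mu + sd * z k - (mu + sd * z m)) with (sd * (z k - z m)) by ring.
    rewrite Rabs_mult, (Rabs_pos_eq sd) by lra. apply Rmult_le_compat_l; [lra|].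
    eapply Rle_trans; [apply Rabs_triang|]. rewrite Rabs_Ropp. lra. }
  assert (Hlog : Rabs (log_ratio k - log_ratio m) <= (M + 1) * C / sd).
  { eapply Rle_trans; [exact Hwalk|].
    replace ((M + 1) * C / sd) with (sd * (M + 1) * (C / (sd * sd))) by (field; lra).
    apply Rmult_le_compat_r; [apply Rle_mult_inv_pos; nra | exact Hkm]. }
  assert (Hzm2 : Rabs (z m ^ 2 / 2) <= / sd).
  { rewrite Rabs_pos_eq by (assert (0 <= z m ^ 2) by apply pow2_ge_0; lra).
    rewrite <- (pow2_abs (z m)). assert (0 <= Rabs (z m)) by apply Rabs_pos. nra. }
  replace (ln (pmf k) - ln (pmf m) + z k ^ 2 / 2)
    with ((log_ratio k - log_ratio m) + z m ^ 2 / 2) by (unfold log_ratio; ring).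
  eapply Rle_trans; [apply Rabs_triang|].
  unfold local_err, local_const.
  replace (((M + 1) * (1 + 4 * (M + 2) ^ 2) + 1) / sd) with ((M + 1) * C / sd + / sd)
    by (unfold C; field; lra).
  lra.
Qed.

Lemma local_gauss_approx M : 2 * (M + 2) <= sd -> local_err M <= / 2 ->
  exists A, 0 < A /\ forall k, (k <= n)%nat -> Rabs (z k) <= M ->
    Rabs (pmf k - A * gauss (z k)) <= 2 * local_err M * (A * gauss (z k)).
Proof.
  intros Hs Herr.
  destruct mean_index_exists as [m [Hm Hzm]].
  assert (Hpmf_m : 0 < pmf m) by (apply binom_pmf_pos; exact hp).
  exists (pmf m). split; [exact Hpmf_m|].
  intros k Hk Hzk.
  set (t := ln (pmf k) - ln (pmf m) + z k ^ 2 / 2).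
  assert (Ht := log_pmf_ratio_bound k m M Hk Hm Hs Hzm Hzk). fold t in Ht.
  assert (Hpos : 0 < pmf m * gauss (z k)) by (apply Rmult_lt_0_compat; [lra | apply gauss_pos]).
  assert (Hpmf : pmf k = pmf m * gauss (z k) * exp t).
  { unfold t, gauss. rewrite Rmult_assoc, <- exp_plus.
    replace (- z k ^ 2 / 2 + (ln (pmf k) - ln (pmf m) + z k ^ 2 / 2))
      with (ln (pmf k) + - ln (pmf m)) by field.
    rewrite exp_plus, exp_Ropp, !exp_ln by (apply binom_pmf_pos; exact hp). field. lra. }
  rewrite Hpmf.
  replace (pmf m * gauss (z k) * exp t - pmf m * gauss (z k))
    with (pmf m * gauss (z k) * (exp t - 1)) by ring.
  rewrite Rabs_mult, (Rabs_pos_eq (pmf m * gauss (z k))) by lra.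
  assert (H := exp_sub_1_bound t (local_err M) Ht Herr). nra.
Qed.

Lemma score_0_le M : M <= sd -> z 0 <= - M.
Proof.
  intros HM. assert (Hsd := sd_pos). assert (Hs2 := sd_sq). assert (Hn := n_pos).
  assert (Hmu : sd * sd <= mu) by (unfold binom_mean; rewrite Hs2; nra).
  unfold std_score. simpl INR. apply (Rmult_le_reg_r sd); [lra|].
  unfold Rdiv. rewrite Rmult_assoc, Rinv_l by lra. nra.
Qed.

Lemma score_n_ge M : M <= sd -> M <= z n.
Proof.
  intros HM. assert (Hsd := sd_pos). assert (Hs2 := sd_sq). assert (Hn := n_pos).
  assert (Hq : sd * sd <= INR n - mu) by (unfold binom_mean; rewrite Hs2; nra).
  unfold std_score. apply (Rmult_le_reg_r sd); [lra|].
  unfold Rdiv. rewrite Rmult_assoc, Rinv_l by lra. nra.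
Qed.

Lemma score_grid k : z k = z 0 + INR k * / sd.
Proof. unfold std_score. simpl INR. field. apply Rgt_not_eq, sd_pos. Qed.

(* [gauss_std_ioc / sd] is a Riemann sum of [gauss] with mesh [1 / sd]. *)
Lemma gauss_std_ioc_approx M u v : M <= sd -> - M <= u -> u <= v -> v <= M ->
  Rabs (gauss_std_ioc n p u v / sd - (gauss_int v - gauss_int u)) <= (2 * M + 4) / sd.
Proof.
  intros Hs Hu Huv Hv. assert (Hsd := sd_pos).
  set (h := / sd). set (x0 := z 0).
  assert (Hh : 0 < h) by (apply Rinv_0_lt_compat; lra).
  assert (Hx : forall k, z k = x0 + INR k * h) by (intros; apply score_grid).
  assert (Hx0 : x0 <= u) by (assert (H := score_0_le M Hs); unfold x0; lra).
  assert (Hxn : v <= x0 + INR n * h) by (assert (H := score_n_ge M Hs); rewrite <- Hx; lra).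
  assert (Hind : forall k, 0 <= ioc_ind u v (x0 + INR k * h) <= 1)
    by (intros; apply ioc_ind_range).
  assert (Hid : nondecr_1_lipschitz (fun t => t)) by (intros a b Hab; lra).
  assert (Hsum_h := grid_sum_ioc_approx (fun t => t) x0 h u v n Hid Hh Huv Hx0 Hxn).
  assert (Hsum_G := grid_sum_ioc_approx gauss_int x0 h u v n gauss_int_incr Hh Huv Hx0 Hxn).
  set (mass := sum_f_R0 (fun k => ioc_ind u v (x0 + INR k * h)) n).
  set (SG := sum_f_R0 (fun k => ioc_ind u v (x0 + INR k * h)
               * (gauss_int (x0 + INR (S k) * h) - gauss_int (x0 + INR k * h))) n) in *.
  assert (Hmass : sum_f_R0 (fun k => ioc_ind u v (x0 + INR k * h)
                    * ((x0 + INR (S k) * h) - (x0 + INR k * h))) n = mass * h)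
    by (unfold mass; rewrite sum_f_R0_mult_r; apply sum_eq; intros; rewrite S_INR; ring).
  cbv beta in Hsum_h. rewrite Hmass in Hsum_h.
  assert (HW : gauss_std_ioc n p u v / sd
               = sum_f_R0 (fun k => ioc_ind u v (x0 + INR k * h)
                                    * (gauss (x0 + INR k * h) * h)) n).
  { unfold gauss_std_ioc, Rdiv. fold h. rewrite sum_f_R0_mult_r.
    apply sum_eq. intros k _. rewrite Hx. ring. }
  assert (Hstep : Rabs (gauss_std_ioc n p u v / sd - SG) <= mass * h * h).
  { rewrite HW. unfold SG, mass. rewrite <- minus_sum, !sum_f_R0_mult_r.
    apply sum_f_R0_abs_le. intros k _.
    rewrite <- Rmult_minus_distr_l, Rabs_mult, (Rabs_pos_eq (ioc_ind _ _ _)) by apply Hind.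
    rewrite S_INR. replace (x0 + (INR k + 1) * h) with (x0 + INR k * h + h) by ring.
    assert (H := gauss_riemann_step (x0 + INR k * h) h Hh).
    assert (H01 := Hind k). rewrite Rmult_assoc. apply Rmult_le_compat_l; [lra|].
    eapply Rle_trans; [exact H|]. lra. }
  apply Rabs_le_between in Hsum_h, Hsum_G, Hstep. apply Rabs_le_between.
  assert (Hmass_le : mass * h * h <= (2 * M + 2) * h).
  { assert (h <= 1) by (unfold h; rewrite <- Rinv_1; apply Rinv_le_contravar; lra). nra. }
  replace ((2 * M + 4) / sd) with ((2 * M + 2) * h + 2 * h) by (unfold h; field; lra).
  lra.
Qed.

Definition window_err (M : R) : R :=
  2 * local_err M * (2 * M + (2 * M + 4) / sd) + (2 * M + 4) / sd.

Definition windows_close (M al e : R) : Prop :=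
  forall u v, - M <= u -> u <= v -> v <= M ->
    Rabs (binom_std_ioc n p u v - al * (gauss_int v - gauss_int u)) <= al * e.

Lemma windows_close_exists M : 0 <= M -> 2 * (M + 2) <= sd -> local_err M <= / 2 ->
  exists al, 0 < al /\ windows_close M al (window_err M).
Proof.
  intros HM Hs Herr. assert (Hsd := sd_pos).
  destruct (local_gauss_approx M Hs Herr) as [A [HA Hloc]].
  exists (A * sd). split; [nra|].
  intros u v Hu Huv Hv.
  assert (HR := gauss_std_ioc_approx M u v ltac:(lra) Hu Huv Hv).
  set (W := gauss_std_ioc n p u v) in *.
  assert (Hpmf : Rabs (binom_std_ioc n p u v - A * W) <= 2 * local_err M * (A * W)).
  { unfold binom_std_ioc, W, gauss_std_ioc.
    rewrite !scal_sum, <- minus_sum.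
    apply sum_f_R0_abs_le. intros k Hk.
    replace (ioc_ind u v (z k) * pmf k - ioc_ind u v (z k) * gauss (z k) * A)
      with (ioc_ind u v (z k) * (pmf k - A * gauss (z k))) by ring.
    rewrite Rabs_mult, (Rabs_pos_eq (ioc_ind u v (z k))) by apply ioc_ind_range.
    unfold ioc_ind. destruct (Rlt_dec u (z k)); [destruct (Rle_dec (z k) v)|]; try lra.
    rewrite Rmult_1_l. eapply Rle_trans; [apply Hloc; [exact Hk | apply Rabs_le_between; lra]|].
    right. ring. }
  assert (HW : 0 <= W) by (apply cond_pos_sum; intros;
    apply Rmult_le_pos; [apply ioc_ind_range | left; apply gauss_pos]).
  assert (HdG := gauss_int_incr u v Huv).
  assert (Herr0 : 0 <= local_err M)
    by (unfold local_err, local_const; apply Rle_mult_inv_pos; [nra | lra]).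
  assert (HeR : 0 <= (2 * M + 4) / sd) by (apply Rle_mult_inv_pos; lra).
  set (w := W / sd) in *.
  assert (EW : W = sd * w) by (unfold w; field; lra).
  rewrite EW in Hpmf.
  apply Rabs_le_between in HR, Hpmf. apply Rabs_le_between.
  assert (Hw : 0 <= w <= 2 * M + (2 * M + 4) / sd) by (split; [unfold w; apply Rle_mult_inv_pos|]; lra).
  assert (Hgrow : 2 * local_err M * (A * (sd * w))
                  <= A * sd * (2 * local_err M * (2 * M + (2 * M + 4) / sd))).
  { replace (2 * local_err M * (A * (sd * w))) with (A * sd * (2 * local_err M * w)) by ring.
    apply Rmult_le_compat_l; [nra|]. apply Rmult_le_compat_l; lra. }
  assert (Hshift : Rabs (A * sd * (w - (gauss_int v - gauss_int u))) <= A * sd * ((2 * M + 4) / sd)).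
  { rewrite Rabs_mult, (Rabs_pos_eq (A * sd)) by nra.
    apply Rmult_le_compat_l; [nra|]. apply Rabs_le_between. lra. }
  apply Rabs_le_between in Hshift.
  unfold window_err. split; nra.
Qed.

Lemma pmf_sum : sum_f_R0 pmf n = 1.
Proof.
  rewrite <- (binom_expect_const n p 1). apply sum_eq. intros; ring.
Qed.

Lemma score_second_moment : sum_f_R0 (fun k => z k ^ 2 * pmf k) n = 1.
Proof.
  assert (Hsd := sd_pos). assert (Hn := n_pos).
  transitivity (/ (sd * sd) * binom_expect n p (fun k =>
    mu ^ 2 + (- 2 * mu) * INR k + 1 * INR k ^ 2 + 0 * INR k ^ 3 + 0 * INR k ^ 4)).
  { unfold binom_expect. rewrite scal_sum. apply sum_eq. intros.
    unfold std_score. field. lra. }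
  rewrite binom_expect_quartic, sd_sq.
  unfold binom_mom1, binom_mom2, binom_mean. field. lra.
Qed.

Lemma binom_std_ioc_le_1 u v : binom_std_ioc n p u v <= 1.
Proof.
  rewrite <- pmf_sum. apply sum_Rle. intros k _.
  assert (H := ioc_ind_range u v (z k)). assert (0 < pmf k) by (apply binom_pmf_pos; exact hp).
  nra.
Qed.

Lemma chebyshev M : 0 < M -> 1 - binom_std_ioc n p (- M) M <= / M ^ 2.
Proof.
  intros HM. assert (HM2 : 0 < M ^ 2) by nra.
  rewrite <- pmf_sum at 1. unfold binom_std_ioc. rewrite <- minus_sum.
  rewrite <- (Rmult_1_r (/ M ^ 2)), <- score_second_moment, scal_sum.
  apply sum_Rle. intros k _.
  assert (0 < pmf k) by (apply binom_pmf_pos; exact hp).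
  assert (0 <= z k ^ 2) by apply pow2_ge_0.
  assert (0 < / M ^ 2) by (apply Rinv_0_lt_compat; lra).
  assert (0 <= z k ^ 2 * pmf k * / M ^ 2) by (apply Rmult_le_pos; [apply Rmult_le_pos|]; lra).
  unfold ioc_ind. destruct (Rlt_dec (- M) (z k)); [destruct (Rle_dec (z k) M)|]; [lra| |];
    assert (Hz : 1 <= z k ^ 2 * / M ^ 2)
      by (apply (Rmult_le_reg_r (M ^ 2)); [lra|]; rewrite Rmult_assoc, Rinv_l by lra; nra);
    nra.
Qed.

(* The window [(-M, M]] carries almost all the mass, which pins the scale [al] down to
   [1 / (2 gauss_half)] up to small errors. *)
Lemma windows_scale_close M al e : 4 <= M -> 0 < al -> 0 <= e <= / 2 ->
  windows_close M al e ->
  al <= 1 /\ Rabs (al * (2 * gauss_half) - 1) <= al * e + / M ^ 2 + 4 * al * exp (- M ^ 2 / 2).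
Proof.
  intros HM Hal He Hwin.
  set (t := exp (- M ^ 2 / 2)).
  assert (Ht : 0 < t <= / 8).
  { split; [apply exp_pos|]. eapply Rle_trans; [apply exp_neg_half_sq_le; lra|].
    apply (Rmult_le_reg_r (M ^ 2)); [nra|].
    unfold Rdiv. rewrite Rmult_assoc, Rinv_l by nra. nra. }
  assert (Hgh := gauss_half_ge_1).
  assert (Htail := gauss_int_tail M ltac:(lra)). fold t in Htail.
  assert (Htail' : 2 * t / gauss_half <= 2 * t).
  { unfold Rdiv. rewrite <- (Rmult_1_r (2 * t)) at 2. apply Rmult_le_compat_l; [lra|].
    rewrite <- Rinv_1. apply Rinv_le_contravar; lra. }
  assert (HP := Hwin (- M) M ltac:(lra) ltac:(lra) ltac:(lra)).
  rewrite gauss_int_opp in HP.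
  set (D := gauss_int M - - gauss_int M) in *.
  assert (HD : 2 * gauss_half - 4 * t <= D <= 2 * gauss_half) by (unfold D; lra).
  assert (Hcheb := chebyshev M ltac:(lra)).
  assert (Hle1 := binom_std_ioc_le_1 (- M) M).
  apply Rabs_le_between in HP.
  assert (Hal1 : al <= 1).
  { assert (1 <= D - e) by lra.
    assert (al * 1 <= al * (D - e)) by (apply Rmult_le_compat_l; lra). lra. }
  split; [exact Hal1|].
  assert (Hgap : 0 <= al * (2 * gauss_half - D) <= al * (4 * t))
    by (split; apply Rmult_le_compat_l || apply Rmult_le_pos; lra).
  apply Rabs_le_between. lra.
Qed.

Lemma binom_std_cdf_split a x :
  a <= x -> binom_std_cdf n p x = binom_std_cdf n p a + binom_std_ioc n p a x.
Proof.
  intros Hax. unfold binom_std_cdf, binom_std_ioc. rewrite <- plus_sum.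
  apply sum_eq. intros k _. unfold le_ind, ioc_ind.
  destruct (Rle_dec (z k) x); destruct (Rle_dec (z k) a); destruct (Rlt_dec a (z k)); lra.
Qed.

Lemma binom_std_cdf_lower_tail M : 0 < M -> 0 <= binom_std_cdf n p (- M) <= / M ^ 2.
Proof.
  intros HM. split.
  - apply cond_pos_sum. intros k. assert (0 < pmf k) by (apply binom_pmf_pos; exact hp).
    assert (Hind := le_ind_range (z k) (- M)). nra.
  - eapply Rle_trans; [|apply (chebyshev M HM)].
    rewrite <- pmf_sum at 1. unfold binom_std_cdf, binom_std_ioc. rewrite <- minus_sum.
    apply sum_Rle. intros k _. assert (0 < pmf k) by (apply binom_pmf_pos; exact hp).
    unfold le_ind, ioc_ind. destruct (Rle_dec (z k) (- M)); destruct (Rlt_dec (- M) (z k));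
      try destruct (Rle_dec (z k) M); lra.
Qed.

Lemma binom_std_cdf_close M al e x : 4 <= M -> - M <= x <= M -> 0 < al ->
  0 <= e <= / 2 -> windows_close M al e ->
  Rabs (binom_std_cdf n p x - normal_cdf x) <= 2 * e + 2 / M ^ 2 + 5 * exp (- M ^ 2 / 2).
Proof.
  intros HM Hx Hal He Hwin.
  destruct (windows_scale_close M al e HM Hal He Hwin) as [Hal1 Hscale].
  set (t := exp (- M ^ 2 / 2)) in *.
  set (g := 2 * gauss_half) in *.
  assert (Hg : 2 <= g) by (assert (H := gauss_half_ge_1); unfold g; lra).
  assert (Hlow := binom_std_cdf_lower_tail M ltac:(lra)).
  set (Dl := gauss_int x - - gauss_int M).
  assert (HDl : 0 <= Dl <= g).
  { assert (H := gauss_int_incr (- M) x ltac:(lra)). rewrite gauss_int_opp in H.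
    assert (Hx' := gauss_int_abs_le x). assert (HM' := gauss_int_abs_le M).
    apply Rabs_le_between in Hx', HM'. unfold Dl, g. lra. }
  assert (HPhi : normal_cdf x = normal_cdf (- M) + Dl / g).
  { unfold normal_cdf, Dl, g, gauss_half. rewrite gauss_int_opp. field.
    assert (H := sqrt_2PI_ge_2). lra. }
  assert (HPhiM := normal_cdf_left_tail (- M) ltac:(lra)).
  replace ((- M) ^ 2) with (M ^ 2) in HPhiM by ring. fold t in HPhiM.
  assert (HP := Hwin (- M) x ltac:(lra) ltac:(lra) ltac:(lra)).
  rewrite gauss_int_opp in HP. fold Dl in HP.
  assert (Hmid : Rabs (binom_std_ioc n p (- M) x - Dl / g) <= 2 * e + / M ^ 2 + 4 * t).
  { replace (binom_std_ioc n p (- M) x - Dl / g)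
      with ((binom_std_ioc n p (- M) x - al * Dl) + Dl / g * (al * g - 1)) by (field; lra).
    eapply Rle_trans; [apply Rabs_triang|].
    rewrite Rabs_mult, (Rabs_pos_eq (Dl / g)) by (apply Rle_mult_inv_pos; lra).
    assert (HDg : Dl / g <= 1).
    { apply (Rmult_le_reg_r g); [lra|]. unfold Rdiv. rewrite Rmult_assoc, Rinv_l by lra. lra. }
    assert (0 <= Dl / g) by (apply Rle_mult_inv_pos; lra).
    assert (0 <= Rabs (al * g - 1)) by apply Rabs_pos.
    assert (Dl / g * Rabs (al * g - 1) <= Rabs (al * g - 1)) by nra.
    assert (al * e <= e) by nra.
    assert (al * t <= t) by (assert (0 < t) by apply exp_pos; nra).
    lra. }
  rewrite (binom_std_cdf_split (- M) x) by lra. rewrite HPhi.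
  apply Rabs_le_between in Hmid. apply Rabs_le_between.
  replace (2 / M ^ 2) with (/ M ^ 2 + / M ^ 2) by (field; nra).
  lra.
Qed.

End LocalLimit.

Definition window_const (M : R) : R := 2 * local_const M * (4 * M + 4) + 2 * M + 4.

Lemma window_err_bounds n p M : 0 <= M -> 1 <= binom_sd n p ->
  0 <= window_err n p M <= window_const M / binom_sd n p.
Proof.
  intros HM Hsd. set (s := binom_sd n p) in *.
  assert (Hlc : 0 <= local_const M) by (unfold local_const; nra).
  assert (Hinv : 0 < / s <= 1)
    by (split; [apply Rinv_0_lt_compat; lra | rewrite <- Rinv_1; apply Rinv_le_contravar; lra]).
  assert (Hq : 0 <= (2 * M + 4) / s <= 2 * M + 4) by (unfold Rdiv; split; nra).
  assert (Hl : 0 <= local_err n p M) by (unfold local_err, Rdiv; fold s; nra).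
  unfold window_err, window_const. fold s.
  replace ((2 * local_const M * (4 * M + 4) + 2 * M + 4) / s)
    with (2 * local_err n p M * (4 * M + 4) + (2 * M + 4) / s)
    by (unfold local_err; fold s; field; lra).
  split; nra.
Qed.

Lemma errors_small_of_sd_large n p M eps : 4 <= M -> 0 < eps ->
  window_const M * (4 / eps + 2) <= binom_sd n p ->
  1 <= binom_sd n p /\ 2 * (M + 2) <= binom_sd n p /\ local_err n p M <= / 2 /\
  0 <= window_err n p M <= / 2 /\ window_err n p M <= eps / 4.
Proof.
  intros HM He Hs. set (s := binom_sd n p) in *.
  assert (Hlc : 1 <= local_const M) by (unfold local_const; nra).
  assert (H4 : 0 < 4 / eps) by (apply Rdiv_lt_0_compat; lra).
  assert (HK : 40 * local_const M <= window_const M /\ 2 * M + 4 <= window_const M).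
  { assert (0 <= local_const M * (M - 4)) by (apply Rmult_le_pos; lra).
    unfold window_const. split; nra. }
  assert (Hs1 : 1 <= s) by nra.
  assert (HsK : window_const M / s <= / (4 / eps + 2)).
  { apply (Rmult_le_reg_r (s * (4 / eps + 2))); [nra|].
    replace (window_const M / s * (s * (4 / eps + 2))) with (window_const M * (4 / eps + 2))
      by (field; lra).
    replace (/ (4 / eps + 2) * (s * (4 / eps + 2))) with s by (field; lra).
    exact Hs. }
  assert (Hq1 : / (4 / eps + 2) <= / 2) by (apply Rinv_le_contravar; lra).
  assert (Hq2 : / (4 / eps + 2) <= eps / 4).
  { apply (Rmult_le_reg_l (4 / eps + 2)); [lra|]. rewrite Rinv_r by lra.
    replace ((4 / eps + 2) * (eps / 4)) with (1 + eps / 2) by (field; lra). lra. }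
  destruct (window_err_bounds n p M ltac:(lra) Hs1) as [He0 He1]. fold s in He1.
  repeat split; try lra; [nra|].
  unfold local_err. fold s. apply (Rmult_le_reg_r s); [lra|].
  unfold Rdiv. rewrite Rmult_assoc, Rinv_l by lra. nra.
Qed.

Lemma binom_std_cdf_uniform x eps : 0 < eps ->
  exists S, forall n p, 0 < p < 1 -> S <= binom_sd n p ->
    Rabs (binom_std_cdf n p x - normal_cdf x) <= eps.
Proof.
  intros He.
  set (M := Rabs x + 4 + 24 / eps).
  assert (Hx := Rabs_pos x). assert (H24 : 0 < 24 / eps) by (apply Rdiv_lt_0_compat; lra).
  assert (HM : 4 <= M) by (unfold M; lra).
  exists (window_const M * (4 / eps + 2)).
  intros n p hp Hs.
  destruct (errors_small_of_sd_large n p M eps HM He Hs) as [Hs1 [Hs2 [Hloc [He1 He2]]]].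
  destruct (windows_close_exists n p hp Hs1 M ltac:(lra) Hs2 Hloc) as [al [Hal Hwin]].
  eapply Rle_trans.
  { apply (binom_std_cdf_close n p hp Hs1 M al (window_err n p M) x HM); try assumption.
    apply Rabs_le_between. unfold M. lra. }
  assert (Ht := exp_neg_half_sq_le M ltac:(lra)).
  assert (HM2 : 12 / M ^ 2 <= eps / 2).
  { apply (Rmult_le_reg_r (M ^ 2)); [nra|].
    unfold Rdiv at 1. rewrite Rmult_assoc, Rinv_l by nra.
    assert (M * eps >= 24) by (unfold M; unfold Rdiv in H24;
      assert (24 / eps * eps = 24) by (field; lra); nra).
    nra. }
  replace (2 / M ^ 2) with (2 * / M ^ 2) in * by (unfold Rdiv; ring).
  replace (12 / M ^ 2) with (12 * / M ^ 2) in HM2 by (unfold Rdiv; ring).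
  lra.
Qed.

(** * The standardized number of regions *)

Section StandardizedRegions.

Variables (n : nat) (p : R).
Hypothesis hp : 0 < p < 1.
Hypothesis hsd : 1 <= binom_sd n p.

Local Notation mu := (binom_mean n p).
Local Notation sd := (binom_sd n p).
Local Notation z := (std_score n p).

Let a := mu + / 2.
Let tau := sd / (2 * a).
Let rho := (1 - 2 * p) / a + sd * sd / (2 * a ^ 2) + (1 - 6 * p * (1 - p)) / (4 * a ^ 2).
Let r := sqrt (1 + rho).
Let phi (t : R) := t + tau * (t ^ 2 - 1).

Lemma sd_sq_mean : sd * sd = mu * (1 - p).
Proof. rewrite sd_sq by assumption. reflexivity. Qed.

Lemma mean_pos : 0 < mu.
Proof. assert (H := n_pos n p hsd). unfold binom_mean. nra. Qed.

Lemma VR_factor : VR n p = (sd * a) ^ 2 * (1 + rho).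
Proof.
  rewrite VR_closed. cbv zeta. assert (Hm := mean_pos).
  replace (INR n * p * (1 - p)) with (sd * sd) by (rewrite sd_sq_mean; reflexivity).
  change (INR n * p) with mu. unfold rho, a. field. lra.
Qed.

Lemma regions_centered k : regions k - ER n p = a * sd * z k + sd * sd * (z k ^ 2 - 1) / 2.
Proof.
  rewrite ER_closed. unfold regions. rewrite (score_affine n p hsd k).
  replace (INR n * p * (1 - p)) with (sd * sd) by (rewrite sd_sq_mean; reflexivity).
  change (INR n * p) with mu. unfold a. field.
Qed.

Hypothesis hm4 : 4 <= mu.

Lemma rho_bound : Rabs rho <= 2 / mu.
Proof.
  assert (Ha : 0 < a) by (unfold a; lra).
  set (ia := / a).
  assert (Hia : 0 < ia) by (apply Rinv_0_lt_compat; lra).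
  assert (Hiaa : ia * a = 1) by (unfold ia; field; lra).
  assert (Hiam : ia * mu <= 1) by (unfold a in Hiaa; nra).
  assert (Hia1 : ia <= 1 / 4) by nra.
  assert (E : rho = (1 - 2 * p) * ia + sd * sd * ia ^ 2 / 2 + (1 - 6 * p * (1 - p)) * ia ^ 2 / 4)
    by (unfold rho, ia; field; lra).
  assert (Hs2 : sd * sd <= mu) by (rewrite sd_sq_mean; nra).
  assert (Hs0 : 0 <= sd * sd) by nra.
  assert (Hpq : - 1 <= 1 - 6 * p * (1 - p) <= 1) by nra.
  assert (H1p : - 1 <= 1 - 2 * p <= 1) by nra.
  assert (Hsia : sd * sd * ia ^ 2 <= ia) by nra.
  assert (Hiam' : ia <= / mu) by (apply (Rmult_le_reg_r mu); [lra | rewrite Rinv_l by lra; lra]).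
  assert (Hia2 : ia ^ 2 <= ia) by nra.
  rewrite E. apply Rabs_le_between. unfold Rdiv. split; nra.
Qed.

Lemma rho_ge : - (1 / 2) <= rho.
Proof.
  assert (H := rho_bound). apply Rabs_le_between in H.
  assert (2 / mu <= 1 / 2).
  { apply (Rmult_le_reg_r mu); [lra|]. unfold Rdiv. rewrite Rmult_assoc, Rinv_l by lra. lra. }
  lra.
Qed.

Lemma r_pos : 0 < r.
Proof. unfold r. apply sqrt_lt_R0. assert (H := rho_ge). lra. Qed.

Lemma tau_bound : 0 <= tau /\ tau ^ 2 <= / (4 * mu).
Proof.
  assert (Ha : 0 < a) by (unfold a; lra). assert (Hs := sd_pos n p hsd).
  split; [unfold tau; apply Rle_mult_inv_pos; lra|].
  assert (Hs2 : sd * sd <= mu) by (rewrite sd_sq_mean; nra).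
  unfold tau. replace ((sd / (2 * a)) ^ 2) with (sd * sd / (4 * a * a)) by (field; lra).
  apply (Rmult_le_reg_r (4 * a * a)); [nra|].
  replace (sd * sd / (4 * a * a) * (4 * a * a)) with (sd * sd) by (field; lra).
  replace (/ (4 * mu) * (4 * a * a)) with (a * a / mu) by (field; lra).
  apply (Rmult_le_reg_r mu); [lra|]. replace (a * a / mu * mu) with (a * a) by (field; lra).
  unfold a. nra.
Qed.

Lemma std_regions_eq k : (regions k - ER n p) / sqrt (VR n p) = phi (z k) / r.
Proof.
  rewrite regions_centered, VR_factor. assert (Hs := sd_pos n p hsd).
  assert (Ha : 0 < a) by (unfold a; lra). assert (Hr := r_pos).
  rewrite sqrt_mult_alt by apply pow2_ge_0. rewrite sqrt_pow2 by nra. fold r.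
  unfold phi, tau. field. lra.
Qed.

Lemma phi_le t1 t2 : - (a / sd) <= t1 -> t1 <= t2 -> phi t1 <= phi t2.
Proof.
  intros H1 H2. assert (Hs := sd_pos n p hsd). assert (Ha : 0 < a) by (unfold a; lra).
  assert (Htau := proj1 tau_bound).
  assert (E : phi t2 - phi t1 = (t2 - t1) * (1 + tau * (t1 + t2))) by (unfold phi; ring).
  assert (E2 : tau * (a / sd) = / 2) by (unfold tau; field; lra).
  assert (0 <= 1 + tau * (t1 + t2)) by nra.
  assert (0 <= (t2 - t1) * (1 + tau * (t1 + t2))) by (apply Rmult_le_pos; lra).
  lra.
Qed.

Lemma score_ge k : - (a / sd) <= z k.
Proof.
  assert (Hs := sd_pos n p hsd). assert (H := score_affine n p hsd k).
  assert (0 <= INR k) by apply pos_INR.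
  apply (Rmult_le_reg_l sd); [lra|].
  replace (sd * - (a / sd)) with (- a) by (field; lra). unfold a. lra.
Qed.

Lemma le_a_div_sd L : 0 <= L -> L ^ 2 <= mu -> L <= a / sd.
Proof.
  intros HL HLm. assert (Hs := sd_pos n p hsd). assert (Ha : 0 < a) by (unfold a; lra).
  assert (Hs2 : sd * sd <= mu) by (rewrite sd_sq_mean; nra).
  assert (HL2 : (L * sd) ^ 2 <= a ^ 2).
  { replace ((L * sd) ^ 2) with (L ^ 2 * (sd * sd)) by ring.
    apply (Rle_trans _ (mu * mu)); [apply Rmult_le_compat; nra|]. unfold a. nra. }
  assert (L * sd <= a) by nra.
  apply (Rmult_le_reg_r sd); [lra|]. unfold Rdiv. rewrite Rmult_assoc, Rinv_l by lra. lra.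
Qed.

Lemma tau_small d L : 0 < d -> (L ^ 2 + 1) ^ 2 / d ^ 2 <= mu ->
  tau * L ^ 2 <= d / 2 /\ tau <= d / 2.
Proof.
  intros Hd HL. destruct tau_bound as [Ht0 Ht2].
  assert (HL2 : 0 <= L ^ 2) by apply pow2_ge_0.
  set (q := d / (2 * (L ^ 2 + 1))).
  assert (Hq : 0 < q) by (apply Rdiv_lt_0_compat; nra).
  assert (Htau : tau <= q).
  { apply Rsqr_incr_0_var; [|lra]. unfold Rsqr. replace (tau * tau) with (tau ^ 2) by ring.
    eapply Rle_trans; [exact Ht2|].
    replace (q * q) with (/ (4 * ((L ^ 2 + 1) ^ 2 / d ^ 2))) by (unfold q; field; nra).
    apply Rinv_le_contravar; [|lra].
    assert (0 < (L ^ 2 + 1) ^ 2 / d ^ 2) by (apply Rdiv_lt_0_compat; nra). lra. }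
  assert (Hq1 : q * (L ^ 2 + 1) = d / 2) by (unfold q; field; nra).
  split; nra.
Qed.

Lemma r_scale_close w d : 0 < d -> 8 * (Rabs w + 1) / d <= mu -> Rabs (w * r - w) <= d / 4.
Proof.
  intros Hd Hw. assert (Hw0 := Rabs_pos w).
  assert (Hr1 : Rabs (r - 1) <= 2 / mu).
  { eapply Rle_trans; [apply sqrt_var_maj|apply rho_bound].
    assert (H := rho_bound). assert (2 / mu <= 1 / 2).
    { apply (Rmult_le_reg_r mu); [lra|]. unfold Rdiv. rewrite Rmult_assoc, Rinv_l by lra. lra. }
    lra. }
  replace (w * r - w) with (w * (r - 1)) by ring. rewrite Rabs_mult.
  assert (Hmu : 2 * (Rabs w + 1) / mu <= d / 4).
  { apply (Rmult_le_reg_r (4 * mu / d)); [apply Rdiv_lt_0_compat; lra|].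
    replace (2 * (Rabs w + 1) / mu * (4 * mu / d)) with (8 * (Rabs w + 1) / d) by (field; lra).
    replace (d / 4 * (4 * mu / d)) with mu by (field; lra). exact Hw. }
  assert (0 <= Rabs (r - 1)) by apply Rabs_pos.
  assert (Rabs w * Rabs (r - 1) <= (Rabs w + 1) * (2 / mu)) by nra.
  replace ((Rabs w + 1) * (2 / mu)) with (2 * (Rabs w + 1) / mu) in * by (field; lra).
  lra.
Qed.

Lemma regions_indicator_sandwich w d k : 0 < d ->
  (Rabs w + d) ^ 2 <= mu -> ((Rabs w + d) ^ 2 + 1) ^ 2 / d ^ 2 <= mu ->
  8 * (Rabs w + 1) / d <= mu ->
  le_ind (z k) (w - d)
  <= (if Rle_dec ((regions k - ER n p) / sqrt (VR n p)) w then 1 else 0)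
  <= le_ind (z k) (w + d).
Proof.
  intros Hd HL1 HL2 HL3.
  set (L := Rabs w + d) in *.
  assert (HL0 : 0 <= L) by (unfold L; assert (H := Rabs_pos w); lra).
  assert (Hr := r_pos).
  assert (HaL := le_a_div_sd L HL0 HL1).
  assert (Hw : - L <= w - d /\ w + d <= L).
  { assert (Hw1 := Rle_abs w). assert (Hw2 := Rle_abs (- w)). rewrite Rabs_Ropp in Hw2.
    unfold L. lra. }
  destruct (tau_small d L Hd HL2) as [HtL Ht].
  assert (Hwr := r_scale_close w d Hd HL3). apply Rabs_le_between in Hwr.
  assert (Htau := proj1 tau_bound).
  rewrite std_regions_eq. set (x := z k). assert (Hx : - (a / sd) <= x) by apply score_ge.
  unfold le_ind. split.
  - destruct (Rle_dec x (w - d)) as [Hxw|Hxw]; [|destruct (Rle_dec _ w); lra].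
    destruct (Rle_dec (phi x / r) w) as [Hle|Hle]; [lra|]. exfalso. apply Hle.
    apply (Rmult_le_reg_r r); [exact Hr|].
    unfold Rdiv. rewrite Rmult_assoc, Rinv_l, Rmult_1_r by lra.
    assert (Hp1 := phi_le x (w - d) Hx Hxw).
    assert (phi (w - d) <= w - d + tau * L ^ 2)
      by (unfold phi; assert ((w - d) ^ 2 <= L ^ 2) by nra; nra).
    lra.
  - destruct (Rle_dec (phi x / r) w) as [Hle|Hle]; [|destruct (Rle_dec x (w + d)); lra].
    destruct (Rle_dec x (w + d)) as [Hxw|Hxw]; [lra|]. exfalso.
    assert (Hp1 := phi_le (w + d) x ltac:(lra) ltac:(lra)).
    assert (w + d - tau <= phi (w + d))
      by (unfold phi; assert (0 <= (w + d) ^ 2) by apply pow2_ge_0; nra).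
    assert (phi x <= w * r).
    { apply (Rmult_le_reg_r (/ r)); [apply Rinv_0_lt_compat; lra|].
      rewrite Rmult_assoc, Rinv_r, Rmult_1_r by lra. exact Hle. }
    lra.
Qed.

End StandardizedRegions.

Definition sandwich_threshold (w d : R) : R :=
  4 + (Rabs w + d) ^ 2 + ((Rabs w + d) ^ 2 + 1) ^ 2 / d ^ 2 + 8 * (Rabs w + 1) / d.

Lemma prob_std_le_sandwich n p w d : 0 < p < 1 -> 1 <= binom_sd n p -> 0 < d ->
  sandwich_threshold w d <= binom_mean n p ->
  binom_std_cdf n p (w - d) <= prob_std_le n p w <= binom_std_cdf n p (w + d).
Proof.
  intros hp hsd Hd Hthr. unfold sandwich_threshold in Hthr.
  assert (Hw := Rabs_pos w).
  assert (0 <= ((Rabs w + d) ^ 2 + 1) ^ 2 / d ^ 2)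
    by (apply Rle_mult_inv_pos; [apply pow2_ge_0 | nra]).
  assert (0 <= 8 * (Rabs w + 1) / d) by (apply Rle_mult_inv_pos; lra).
  assert (0 <= (Rabs w + d) ^ 2) by apply pow2_ge_0.
  unfold binom_std_cdf, prob_std_le. split; apply sum_Rle; intros k _;
    assert (Hpmf := binom_pmf_pos n p k hp);
    destruct (regions_indicator_sandwich n p hp hsd ltac:(lra) w d k Hd ltac:(lra) ltac:(lra)
                ltac:(lra)) as [Hlow Hup];
    destruct (Rle_dec ((regions k - ER n p) / sqrt (VR n p)) w); nra.
Qed.

Lemma growth_lower_bounds n p : 1 <= INR n -> 0 < p < 1 ->
  let g := Rpower (INR n) (1 / 9) * p * Rpower (1 - p) (1 / 3) in
  g <= INR n * p /\ g ^ 3 <= INR n * p * (1 - p).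
Proof.
  intros Hn hp g. set (x := INR n) in *. set (q := 1 - p).
  set (A := Rpower x (1 / 9)). set (Q := Rpower q (1 / 3)).
  assert (HA : 0 < A) by (unfold A, Rpower; apply exp_pos).
  assert (HQ : 0 < Q) by (unfold Q, Rpower; apply exp_pos).
  assert (HAx : A <= x)
    by (unfold A; rewrite <- (Rpower_1 x) at 2 by lra; apply Rle_Rpower; lra).
  assert (HQ1 : Q <= 1).
  { unfold Q, Rpower. rewrite <- exp_0 at 2. apply exp_le_exp.
    assert (ln q < 0) by (rewrite <- ln_1; apply ln_increasing; unfold q; lra). lra. }
  assert (HA3 : A ^ 3 <= x).
  { unfold A. rewrite <- Rpower_pow by (unfold Rpower; apply exp_pos). rewrite Rpower_mult.
    rewrite <- (Rpower_1 x) at 2 by lra. apply Rle_Rpower; [lra | simpl; lra]. }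
  assert (HQ3 : Q ^ 3 = q).
  { unfold Q. rewrite <- Rpower_pow by (unfold Rpower; apply exp_pos). rewrite Rpower_mult.
    replace (1 / 3 * INR 3) with 1 by (simpl; field). apply Rpower_1. unfold q; lra. }
  fold q A Q in g. unfold g. split.
  - assert (A * p * Q <= A * p * 1) by (apply Rmult_le_compat_l; nra). nra.
  - replace ((A * p * Q) ^ 3) with (A ^ 3 * p ^ 3 * Q ^ 3) by ring. rewrite HQ3.
    assert (p ^ 3 <= p) by nra. assert (0 < q) by (unfold q; lra).
    apply Rmult_le_compat_r; [lra|]. apply Rmult_le_compat; nra.
Qed.

Lemma binom_mean_sd_unbounded (p : nat -> R) :
  (forall n, 0 < p n < 1) ->
  is_lim_seq (fun n => Rpower (INR n) (1 / 9) * p n * Rpower (1 - p n) (1 / 3)) p_infty ->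
  forall B, eventually (fun n => B <= binom_mean n (p n) /\ B <= binom_sd n (p n)).
Proof.
  intros hp hgrowth B. apply is_lim_seq_spec in hgrowth.
  destruct (hgrowth (Rabs B + 1)) as [N HN].
  exists (S N). intros n Hn. specialize (HN n ltac:(lia)).
  assert (Hn1 : 1 <= INR n) by (apply (le_INR 1); lia).
  destruct (growth_lower_bounds n (p n) Hn1 (hp n)) as [Hmu Hvar].
  set (g := Rpower (INR n) (1 / 9) * p n * Rpower (1 - p n) (1 / 3)) in *.
  assert (HB := Rle_abs B). assert (HB0 := Rabs_pos B).
  split; [unfold binom_mean; lra|].
  apply (Rle_trans _ (Rabs B)); [exact HB|]. unfold binom_sd.
  rewrite <- (sqrt_pow2 (Rabs B)) by exact HB0. apply sqrt_le_1_alt.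
  assert (Hg1 : 1 <= g) by lra. nra.
Qed.

Lemma prob_std_le_pointwise (p : nat -> R) :
  (forall n, 0 < p n < 1) ->
  is_lim_seq (fun n => Rpower (INR n) (1 / 9) * p n * Rpower (1 - p n) (1 / 3)) p_infty ->
  forall w eps, 0 < eps ->
    eventually (fun n => Rabs (prob_std_le n (p n) w - normal_cdf w) <= eps).
Proof.
  intros hp hgrowth w eps He.
  destruct (binom_std_cdf_uniform (w - eps) (eps / 2) ltac:(lra)) as [S1 HS1].
  destruct (binom_std_cdf_uniform (w + eps) (eps / 2) ltac:(lra)) as [S2 HS2].
  assert (HB1 := Rmax_l (sandwich_threshold w eps) (Rmax (Rmax S1 S2) 1)).
  assert (HB2 := Rmax_r (sandwich_threshold w eps) (Rmax (Rmax S1 S2) 1)).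
  assert (HB3 := Rmax_l (Rmax S1 S2) 1). assert (HB4 := Rmax_r (Rmax S1 S2) 1).
  assert (HB5 := Rmax_l S1 S2). assert (HB6 := Rmax_r S1 S2).
  set (B := Rmax (sandwich_threshold w eps) (Rmax (Rmax S1 S2) 1)) in *.
  destruct (binom_mean_sd_unbounded p hp hgrowth B) as [N HN].
  exists N. intros n Hn. destruct (HN n Hn) as [Hmu Hsd].
  destruct (prob_std_le_sandwich n (p n) w eps (hp n) ltac:(lra) He ltac:(lra))
    as [Hlow Hup].
  assert (H1 := HS1 n (p n) (hp n) ltac:(lra)).
  assert (H2 := HS2 n (p n) (hp n) ltac:(lra)).
  apply Rabs_le_between in H1, H2.
  assert (Hl1 := normal_cdf_incr (w - eps) w ltac:(lra)).
  assert (Hl2 := normal_cdf_incr w (w + eps) ltac:(lra)).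
  apply Rabs_le_between. lra.
Qed.

(** * Uniform convergence *)

Lemma eventually_forall_le (P : nat -> nat -> Prop) J :
  (forall j, (j <= J)%nat -> eventually (P j)) ->
  eventually (fun n => forall j, (j <= J)%nat -> P j n).
Proof.
  induction J as [|J IH]; intros H.
  - destruct (H 0%nat (le_n 0)) as [N HN]. exists N. intros n Hn j Hj.
    replace j with 0%nat by lia. now apply HN.
  - destruct IH as [N1 HN1]; [intros j Hj; apply H; lia|].
    destruct (H (S J) (le_n _)) as [N2 HN2].
    exists (Nat.max N1 N2). intros n Hn j Hj.
    destruct (Nat.eq_dec j (S J)) as [->|Hne]; [apply HN2 | apply HN1]; lia.
Qed.

Lemma cdf_gap_between (F G : R -> R) a b w h :
  (forall x y, x <= y -> F x <= F y) -> nondecr_1_lipschitz G ->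
  a <= w <= b -> b - a <= h -> Rabs (F a - G a) <= h -> Rabs (F b - G b) <= h ->
  Rabs (F w - G w) <= 2 * h.
Proof.
  intros HF HG Hw Hab Ha Hb. apply Rabs_le_between in Ha, Hb.
  assert (F a <= F w) by (apply HF; lra). assert (F w <= F b) by (apply HF; lra).
  assert (HGa := HG a w ltac:(lra)). assert (HGb := HG w b ltac:(lra)).
  apply Rabs_le_between. lra.
Qed.

Lemma grid_bracket x0 h w : 0 < h -> x0 <= w ->
  exists j, x0 + INR j * h <= w < x0 + INR (S j) * h.
Proof.
  intros Hh Hw. destruct (nfloor_ex ((w - x0) / h)) as [j Hj];
    [apply Rle_mult_inv_pos; lra|].
  exists j. assert (E : (w - x0) / h * h = w - x0) by (field; lra).
  rewrite S_INR. split; nra.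
Qed.

(* Polya: monotone functions converging pointwise to a continuous limit with the right
   limits at infinity converge uniformly; it suffices to check a finite grid. *)
Lemma uniform_of_pointwise_cdf (F : nat -> R -> R) (G : R -> R) :
  (forall n a b, a <= b -> F n a <= F n b) ->
  (forall n a, 0 <= F n a <= 1) ->
  nondecr_1_lipschitz G ->
  (forall a, 0 <= G a <= 1) ->
  (forall eps, 0 < eps -> exists K, 0 <= K /\ G (- K) <= eps /\ 1 - eps <= G K) ->
  (forall w eps, 0 < eps -> eventually (fun n => Rabs (F n w - G w) <= eps)) ->
  forall eps, 0 < eps -> eventually (fun n => forall w, Rabs (F n w - G w) <= eps).
Proof.
  intros HFmono HFrange HG HGrange Htails Hpw eps He.
  set (h := eps / 2). assert (Hh : 0 < h) by (unfold h; lra).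
  destruct (Htails h Hh) as [K [HK [HKl HKr]]].
  set (grid := fun j : nat => - K + INR j * h).
  destruct (nfloor_ex (2 * K / h)) as [J0 HJ0]; [apply Rle_mult_inv_pos; lra|].
  set (J := S J0).
  assert (HJ : K <= grid J).
  { unfold grid, J. rewrite S_INR. assert (2 * K / h * h = 2 * K) by (field; lra). nra. }
  destruct (eventually_forall_le (fun j n => Rabs (F n (grid j) - G (grid j)) <= h) J)
    as [N HN]; [intros j _; apply Hpw; exact Hh|].
  exists N. intros n Hn w. specialize (HN n Hn).
  assert (HF := HFrange n w). assert (HGw := HGrange w).
  replace eps with (2 * h) by (unfold h; field).
  destruct (Rle_dec w (- K)) as [Hw|Hw]; [|destruct (Rle_dec (grid J) w) as [Hw2|Hw2]].
  - assert (H0 := HN 0%nat (Nat.le_0_l J)). unfold grid in H0. simpl INR in H0.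
    replace (- K + 0 * h) with (- K) in H0 by ring. apply Rabs_le_between in H0.
    assert (F n w <= F n (- K)) by (apply HFmono; exact Hw).
    assert (HGK := HG w (- K) Hw).
    apply Rabs_le_between. lra.
  - assert (HJ' := HN J (le_n J)). apply Rabs_le_between in HJ'.
    assert (F n (grid J) <= F n w) by (apply HFmono; exact Hw2).
    assert (HGK := HG K (grid J) HJ). assert (HGJ := HG (grid J) w Hw2).
    apply Rabs_le_between. lra.
  - destruct (grid_bracket (- K) h w Hh ltac:(lra)) as [j [Hlo Hhi]].
    assert (HjJ : (S j <= J)%nat).
    { apply Rnot_le_lt in Hw2. unfold grid in Hw2.
      assert (Hlt : INR j < INR J) by nra. apply INR_lt in Hlt. lia. }
    apply (cdf_gap_between (F n) G (grid j) (grid (S j))); try assumption.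
    + intros a b; apply HFmono.
    + unfold grid. lra.
    + unfold grid. rewrite S_INR. lra.
    + apply HN. lia.
    + apply HN. exact HjJ.
Qed.

Lemma prob_std_le_mono n p a b : 0 < p < 1 -> a <= b -> prob_std_le n p a <= prob_std_le n p b.
Proof.
  intros hp Hab. unfold prob_std_le. apply sum_Rle. intros k _.
  assert (Hb := binom_pmf_pos n p k hp).
  destruct (Rle_dec _ a); destruct (Rle_dec _ b); lra.
Qed.

Lemma prob_std_le_range n p a : 0 < p < 1 -> 0 <= prob_std_le n p a <= 1.
Proof.
  intros hp. rewrite <- (binom_expect_const n p 1). unfold prob_std_le, binom_expect.
  split.
  - apply cond_pos_sum. intros k. assert (Hb := binom_pmf_pos n p k hp).
    destruct (Rle_dec _ a); lra.
  - apply sum_Rle. intros k _. assert (Hb := binom_pmf_pos n p k hp).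
    destruct (Rle_dec _ a); lra.
Qed.

Lemma normal_cdf_1_lipschitz : nondecr_1_lipschitz normal_cdf.
Proof. intros a b Hab. assert (H := normal_cdf_incr a b Hab). lra. Qed.

Lemma normal_cdf_tails eps : 0 < eps ->
  exists K, 0 <= K /\ normal_cdf (- K) <= eps /\ 1 - eps <= normal_cdf K.
Proof.
  intros He. set (K := 2 / eps + 1).
  assert (H2e : 0 < 2 / eps) by (apply Rdiv_lt_0_compat; lra).
  assert (Hsmall : normal_cdf (- K) <= eps).
  { assert (Htail := normal_cdf_left_tail (- K) ltac:(unfold K; lra)).
    assert (Hexp := exp_neg_half_sq_le (- K) ltac:(unfold K; lra)).
    replace ((- K) ^ 2) with (K ^ 2) in * by ring.
    assert (2 / K ^ 2 <= eps).
    { apply (Rmult_le_reg_r (K ^ 2)); [unfold K; nra|].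
      unfold Rdiv at 1. rewrite Rmult_assoc, Rinv_l, Rmult_1_r by (unfold K; nra).
      assert (2 / eps * eps = 2) by (field; lra). unfold K. nra. }
    lra. }
  exists K. split; [unfold K; lra|]. split; [exact Hsmall|]. rewrite <- (Ropp_involutive K).
  rewrite normal_cdf_opp. lra.
Qed.

Theorem theorem4 (p : nat -> R)
  (hp : forall n, 0 < p n < 1)
  (hgrowth : is_lim_seq
     (fun n => Rpower (INR n) (1/9) * p n * Rpower (1 - p n) (1/3)) p_infty) :
  forall eps, 0 < eps ->
    exists N : nat, forall n, (N <= n)%nat ->
      forall w : R, Rabs (prob_std_le n (p n) w - Phi w) <= eps.
Proof.
  intros eps He.
  destruct (uniform_of_pointwise_cdf (fun n => prob_std_le n (p n)) normal_cdf
              (fun n a b => prob_std_le_mono n (p n) a b (hp n))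
              (fun n a => prob_std_le_range n (p n) a (hp n))
              normal_cdf_1_lipschitz normal_cdf_range normal_cdf_tails
              (prob_std_le_pointwise p hp hgrowth) eps He) as [N HN].
  exists N. intros n Hn w. rewrite Phi_normal_cdf. exact (HN n Hn w).
Qed.
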